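(* Let $V$ be a real symmetric positive-definite $N\times N$ matrix and $\alpha>0$. Then: 1) $L_-$ and its orthogonal complement $L_0$ in $\mathbb R^{2N}$ are invariant under $A$; 2) the spectrum of the restriction $A_-$ of $A$ to $L_-$ lies in the open left half-plane, $\|e^{tA_-}\|\to0$ exponentially fast as $t\to\infty$, and $$L_-=\{\psi\in\mathbb R^{2N}: H(e^{tA}\psi)\to0\text{ as }t\to\infty\}.$$
   Context: $\psi=(q,p)\in\mathbb R^{2N}$, $H(\psi)=\frac12\sum_ip_i^2+\frac12\sum_{i,j}V(i,j)q_iq_j$. $A=\begin{pmatrix}0&E\\-V&-\alpha D\end{pmatrix}$, where $E$ is the $N\times N$ identity and $D$ is the diagonal $N\times N$ matrix with $D_{11}=1$ and all other entries $0$ (damping acting on $p_1$ only). $l_V$ is the span of $V^ke_1$, $k\ge0$ ($e_1$ the first standard basis vector of $\mathbb R^N$), and $L_-=\{(q,p):q,p\in l_V\}$. *)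

(* real analysis (exponentials, limits) needs Stdlib Reals.
   Vectors of R^N are functions nat -> R, only indices 0..N-1 are relevant.
   Index 0 plays the role of the paper's index 1 (e_1, D_11, p_1). *)
From Stdlib Require Import Reals Factorial.
Open Scope R_scope.

Definition vec := nat -> R.
(* a phase-space vector psi = (q, p) in R^(2N) *)
Definition state := (vec * vec)%type.

Fixpoint rsum (n : nat) (f : nat -> R) : R :=
  match n with O => 0 | S k => rsum k f + f k end.

Definition dot (N : nat) (x y : vec) : R := rsum N (fun i => x i * y i).

Definition matvec (N : nat) (M : nat -> nat -> R) (x : vec) : vec :=
  fun i => rsum N (fun j => M i j * x j).

Definition symmetric (N : nat) (M : nat -> nat -> R) : Prop :=
  forall i j, (i < N)%nat -> (j < N)%nat -> M i j = M j i.

Definition nonzero_vec (N : nat) (x : vec) : Prop :=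
  exists i, (i < N)%nat /\ x i <> 0.

Definition pos_def (N : nat) (M : nat -> nat -> R) : Prop :=
  forall x, nonzero_vec N x -> dot N x (matvec N M x) > 0.

Definition e1 : vec := fun i => if Nat.eqb i 0 then 1 else 0.

Fixpoint Vke1 (N : nat) (V : nat -> nat -> R) (k : nat) : vec :=
  match k with O => e1 | S k' => matvec N V (Vke1 N V k') end.

Definition in_lV (N : nat) (V : nat -> nat -> R) (x : vec) : Prop :=
  exists (m : nat) (c : nat -> R),
    forall i, (i < N)%nat -> x i = rsum m (fun k => c k * Vke1 N V k i).

Definition in_Lminus (N : nat) (V : nat -> nat -> R) (psi : state) : Prop :=
  in_lV N V (fst psi) /\ in_lV N V (snd psi).

Definition dot2 (N : nat) (x y : state) : R :=
  dot N (fst x) (fst y) + dot N (snd x) (snd y).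

Definition norm2 (N : nat) (x : state) : R := sqrt (dot2 N x x).

Definition in_L0 (N : nat) (V : nat -> nat -> R) (psi : state) : Prop :=
  forall phi, in_Lminus N V phi -> dot2 N psi phi = 0.

(* A (q,p) = (p, -V q - alpha D p), D = diag(1,0,...,0) *)
Definition Aop (N : nat) (V : nat -> nat -> R) (alpha : R) (psi : state) : state :=
  (snd psi,
   fun i => - matvec N V (fst psi) i - (if Nat.eqb i 0 then alpha * snd psi O else 0)).

Definition Apow (N : nat) (V : nat -> nat -> R) (alpha : R) (k : nat) (psi : state)
  : state := Nat.iter k (Aop N V alpha) psi.

Definition Ham (N : nat) (V : nat -> nat -> R) (psi : state) : R :=
  / 2 * dot N (snd psi) (snd psi) + / 2 * dot N (fst psi) (matvec N V (fst psi)).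

Definition st_eq (N : nat) (x y : state) : Prop :=
  forall i, (i < N)%nat -> fst x i = fst y i /\ snd x i = snd y i.

Definition st_nonzero (N : nat) (x : state) : Prop :=
  nonzero_vec N (fst x) \/ nonzero_vec N (snd x).

Definition st_lin (a : R) (x : state) (b : R) (y : state) : state :=
  (fun i => a * fst x i + b * fst y i, fun i => a * snd x i + b * snd y i).

Definition is_expA (N : nat) (V : nat -> nat -> R) (alpha t : R) (psi phi : state)
  : Prop :=
  forall i, (i < N)%nat ->
    Un_cv (fun n => sum_f_R0 (fun k => t ^ k / INR (Factorial.fact k) * fst (Apow N V alpha k psi) i) n)
          (fst phi i) /\
    Un_cv (fun n => sum_f_R0 (fun k => t ^ k / INR (Factorial.fact k) * snd (Apow N V alpha k psi) i) n)
          (snd phi i).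

(* a + i b is an eigenvalue of the restriction A_- of A to L_- :
   there is a nonzero complex eigenvector u + i v with u, v in L_-, i.e.
   A u = a u - b v and A v = b u + a v. *)
Definition eigenvalue_Aminus (N : nat) (V : nat -> nat -> R) (alpha a b : R) : Prop :=
  exists u v : state,
    in_Lminus N V u /\ in_Lminus N V v /\ (st_nonzero N u \/ st_nonzero N v) /\
    st_eq N (Aop N V alpha u) (st_lin a u (- b) v) /\
    st_eq N (Aop N V alpha v) (st_lin b u a v).

Definition tends_to_0_at_infty (f : R -> R) : Prop :=
  forall eps, eps > 0 -> exists T, forall t, t >= T -> Rabs (f t) < eps.

From Stdlib Require Import Reals Factorial Psatz Lia Lra IndefiniteDescription.
From Coquelicot Require Import Coquelicot.
Open Scope R_scope.

(* The energy [H] is a Lyapunov function: along [e^(tA) psi] its derivative is [-alpha p_1^2].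
   On [L_-] the output [p_1] is observable: [l_V] is spanned by finitely many [V^(k+1) e_1],
   and the coordinates of a state along them are combinations of the outputs
   [p_1 (A^j psi)], [j < J].  Hence [W = sum_(j<J) H (A^j e^(tA) psi)] satisfies [W' <= - c W]
   and decays exponentially.  On the invariant complement [L_0] the output vanishes, so the
   energy pairing with orbits in [L_0] is conserved; if [H (e^(tA) psi) -> 0], Cauchy-Schwarz
   kills the [L_0]-component of [psi].  An eigenvalue with nonnegative real part would force
   [p_1 = 0] on its eigenvector, hence a [V]-eigenvector in [l_V] orthogonal to [l_V]. *)

Lemma sq_nonneg x : 0 <= x * x.
Proof. pose proof (Rle_0_sqr x). unfold Rsqr in *. lra. Qed.

Lemma sq_add_le a b : (a + b) * (a + b) <= 2 * (a * a) + 2 * (b * b).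
Proof. pose proof (sq_nonneg (a - b)). lra. Qed.

Lemma discriminant_le A B C :
  0 <= B -> (forall l, 0 <= A - 2 * l * C + l * l * B) -> C * C <= A * B.
Proof.
  intros HB H. destruct (Rle_lt_or_eq_dec 0 B HB) as [Hb|<-].
  - specialize (H (C / B)).
    replace (A - 2 * (C / B) * C + C / B * (C / B) * B) with (A - C * C / B) in H
      by (field; lra).
    apply (Rmult_le_reg_r (/ B)); [now apply Rinv_0_lt_compat|].
    replace (A * B * / B) with A by (field; lra). unfold Rdiv in H. lra.
  - destruct (Req_dec C 0) as [->|HC]; [specialize (H 0); lra|].
    specialize (H ((A + 1) / (2 * C))).
    replace (A - 2 * ((A + 1) / (2 * C)) * C + (A + 1) / (2 * C) * ((A + 1) / (2 * C)) * 0)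
      with (-1) in H by (field; auto). lra.
Qed.

Lemma rsum_ext n f g :
  (forall i, (i < n)%nat -> f i = g i) -> rsum n f = rsum n g.
Proof.
  induction n as [|n IH]; simpl; intros H; [reflexivity|].
  rewrite IH by (intros; apply H; lia). rewrite H by lia. reflexivity.
Qed.

Lemma rsum_plus n f g : rsum n (fun i => f i + g i) = rsum n f + rsum n g.
Proof. induction n; simpl; [lra|]. rewrite IHn; lra. Qed.

Lemma rsum_minus n f g : rsum n (fun i => f i - g i) = rsum n f - rsum n g.
Proof. induction n; simpl; [lra|]. rewrite IHn; lra. Qed.

Lemma rsum_scal n c f : rsum n (fun i => c * f i) = c * rsum n f.
Proof. induction n; simpl; [lra|]. rewrite IHn; lra. Qed.

Lemma rsum_opp n f : rsum n (fun i => - f i) = - rsum n f.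
Proof. induction n; simpl; [lra|]. rewrite IHn; lra. Qed.

Lemma rsum_zero n f : (forall i, (i < n)%nat -> f i = 0) -> rsum n f = 0.
Proof.
  induction n as [|n IH]; simpl; intros H; [reflexivity|].
  rewrite IH by (intros; apply H; lia). rewrite H by lia. lra.
Qed.

Lemma rsum_swap n m F :
  rsum n (fun i => rsum m (fun j => F i j)) = rsum m (fun j => rsum n (fun i => F i j)).
Proof.
  induction n as [|n IH]; simpl.
  - symmetry; now apply rsum_zero.
  - now rewrite IH, <- rsum_plus.
Qed.

Lemma rsum_add_range s n f : rsum (s + n) f = rsum s f + rsum n (fun j => f (s + j)%nat).
Proof.
  induction n as [|n IH]; simpl; [rewrite Nat.add_0_r; lra|].
  rewrite Nat.add_succ_r. simpl. rewrite IH. lra.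
Qed.

Lemma rsum_nonneg n f : (forall i, (i < n)%nat -> 0 <= f i) -> 0 <= rsum n f.
Proof.
  induction n as [|n IH]; simpl; intros H; [lra|].
  assert (0 <= f n) by (apply H; lia). assert (0 <= rsum n f) by (apply IH; intros; apply H; lia).
  lra.
Qed.

Lemma rsum_le n f g : (forall i, (i < n)%nat -> f i <= g i) -> rsum n f <= rsum n g.
Proof.
  induction n as [|n IH]; simpl; intros H; [lra|].
  assert (f n <= g n) by (apply H; lia).
  assert (rsum n f <= rsum n g) by (apply IH; intros; apply H; lia). lra.
Qed.

Section Nonneg.
Variable f : nat -> R.
Hypothesis f_nonneg : forall i, 0 <= f i.

Lemma rsum_le_range s n : rsum n (fun j => f (s + j)%nat) <= rsum (s + n) f.
Proof. rewrite rsum_add_range. pose proof (rsum_nonneg s f (fun _ _ => f_nonneg _)). lra. Qed.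

Lemma rsum_le_len n m : (n <= m)%nat -> rsum n f <= rsum m f.
Proof.
  intros Hnm. replace m with (n + (m - n))%nat by lia. rewrite rsum_add_range.
  pose proof (rsum_nonneg (m - n) (fun j => f (n + j)%nat) (fun _ _ => f_nonneg _)). lra.
Qed.

Lemma rsum_term_le n i : (i < n)%nat -> f i <= rsum n f.
Proof.
  intros Hi. eapply Rle_trans; [|apply (rsum_le_len (S i)); lia].
  simpl. pose proof (rsum_nonneg i f (fun _ _ => f_nonneg _)). lra.
Qed.

End Nonneg.

Lemma rsum_delta n i f :
  (i < n)%nat -> rsum n (fun j => (if Nat.eqb j i then 1 else 0) * f j) = f i.
Proof.
  induction n as [|n IH]; intros Hi; [lia|]. simpl. destruct (Nat.eqb_spec n i) as [->|Hn].
  - rewrite rsum_zero; [lra|]. intros j Hj. destruct (Nat.eqb_spec j i); [lia|lra].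
  - rewrite IH by lia. lra.
Qed.

Lemma rsum_Cauchy_Schwarz n f g :
  rsum n (fun i => f i * g i) * rsum n (fun i => f i * g i)
  <= rsum n (fun i => f i * f i) * rsum n (fun i => g i * g i).
Proof.
  apply discriminant_le; [apply rsum_nonneg; intros; apply sq_nonneg|]. intros l.
  replace (rsum n (fun i => f i * f i) - 2 * l * rsum n (fun i => f i * g i)
           + l * l * rsum n (fun i => g i * g i))
    with (rsum n (fun i => (f i - l * g i) * (f i - l * g i))).
  { apply rsum_nonneg; intros; apply sq_nonneg. }
  rewrite (rsum_ext n _ (fun i => (f i * f i - (2 * l) * (f i * g i)) + (l * l) * (g i * g i)))
    by (intros; ring).
  rewrite rsum_plus, rsum_minus, !rsum_scal. ring.
Qed.
Section Vectors.
Variable N : nat.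

Lemma dot_comm x y : dot N x y = dot N y x.
Proof. unfold dot. apply rsum_ext; intros; ring. Qed.

Lemma dot_ext x x' y y' :
  (forall i, (i < N)%nat -> x i = x' i) -> (forall i, (i < N)%nat -> y i = y' i) ->
  dot N x y = dot N x' y'.
Proof. intros Hx Hy. unfold dot. apply rsum_ext; intros. now rewrite Hx, Hy. Qed.

Lemma dot_plus_l x y z : dot N (fun i => x i + y i) z = dot N x z + dot N y z.
Proof. unfold dot. rewrite <- rsum_plus. apply rsum_ext; intros; ring. Qed.

Lemma dot_minus_l x y z : dot N (fun i => x i - y i) z = dot N x z - dot N y z.
Proof. unfold dot. rewrite <- rsum_minus. apply rsum_ext; intros; ring. Qed.

Lemma dot_scal_l c x z : dot N (fun i => c * x i) z = c * dot N x z.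
Proof. unfold dot. rewrite <- rsum_scal. apply rsum_ext; intros; ring. Qed.

Lemma dot_opp_l x z : dot N (fun i => - x i) z = - dot N x z.
Proof. unfold dot. rewrite <- rsum_opp. apply rsum_ext; intros; ring. Qed.

Lemma dot_zero_r x : dot N x (fun _ => 0) = 0.
Proof. unfold dot. apply rsum_zero. intros; ring. Qed.

Lemma dot_rsum_l m c f z :
  dot N (fun i => rsum m (fun k => c k * f k i)) z = rsum m (fun k => c k * dot N (f k) z).
Proof.
  unfold dot. rewrite (rsum_ext N _ (fun i => rsum m (fun k => c k * (f k i * z i)))).
  - rewrite rsum_swap. apply rsum_ext; intros. now rewrite rsum_scal.
  - intros. rewrite Rmult_comm, <- rsum_scal. apply rsum_ext; intros; ring.
Qed.

Lemma dot_expand u w c :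
  dot N (fun i => u i + c * w i) (fun i => u i + c * w i)
  = dot N u u + 2 * c * dot N u w + c * c * dot N w w.
Proof. unfold dot. rewrite <- !rsum_scal, <- !rsum_plus. apply rsum_ext; intros; ring. Qed.

Lemma dot_Cauchy_Schwarz x y : dot N x y * dot N x y <= dot N x x * dot N y y.
Proof. apply rsum_Cauchy_Schwarz. Qed.

Lemma dot_nonneg x : 0 <= dot N x x.
Proof. apply rsum_nonneg. intros; apply sq_nonneg. Qed.

Lemma dot2_nonneg x : 0 <= dot2 N x x.
Proof. unfold dot2. pose proof (dot_nonneg (fst x)). pose proof (dot_nonneg (snd x)). lra. Qed.

Lemma sq_le_dot x i : (i < N)%nat -> x i * x i <= dot N x x.
Proof. apply (rsum_term_le (fun i => x i * x i)). intros; apply sq_nonneg. Qed.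

Lemma dot_self_eq0 x : dot N x x = 0 -> forall i, (i < N)%nat -> x i = 0.
Proof.
  intros H i Hi. pose proof (sq_le_dot x i Hi). pose proof (sq_nonneg (x i)).
  assert (Hxi : x i * x i = 0) by lra. apply Rmult_integral in Hxi. tauto.
Qed.

Lemma dot_self_pos x : nonzero_vec N x -> 0 < dot N x x.
Proof.
  intros [i [Hi Hx]]. destruct (Rle_lt_or_eq_dec 0 _ (dot_nonneg x)) as [|H]; auto.
  exfalso. apply Hx. now apply dot_self_eq0.
Qed.

Definition unitv (i : nat) : vec := fun k => if Nat.eqb k i then 1 else 0.

Lemma dot_unitv i y : (i < N)%nat -> dot N (unitv i) y = y i.
Proof. intros. now apply rsum_delta. Qed.

Lemma dot_e1 x : (1 <= N)%nat -> dot N x e1 = x 0%nat.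
Proof. intros. rewrite dot_comm. now apply dot_unitv. Qed.

Lemma dot_scal_e1_l c z :
  (1 <= N)%nat -> dot N (fun i => if Nat.eqb i 0 then c else 0) z = c * z 0%nat.
Proof.
  intros HN. rewrite (dot_ext _ (fun i => c * e1 i) z z) by
    (intros i _; unfold e1; destruct (Nat.eqb i 0); ring || reflexivity).
  now rewrite dot_scal_l, dot_comm, dot_e1.
Qed.

Variable V : nat -> nat -> R.

Lemma matvec_ext x y :
  (forall i, (i < N)%nat -> x i = y i) -> forall i, matvec N V x i = matvec N V y i.
Proof. intros H i. unfold matvec. apply rsum_ext; intros. now rewrite H. Qed.

Lemma matvec_plus x y i : matvec N V (fun j => x j + y j) i = matvec N V x i + matvec N V y i.
Proof. unfold matvec. rewrite <- rsum_plus. apply rsum_ext; intros; ring. Qed.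

Lemma matvec_scal c x i : matvec N V (fun j => c * x j) i = c * matvec N V x i.
Proof. unfold matvec. rewrite <- rsum_scal. apply rsum_ext; intros; ring. Qed.

Lemma matvec_rsum m c f i :
  matvec N V (fun j => rsum m (fun k => c k * f k j)) i = rsum m (fun k => c k * matvec N V (f k) i).
Proof.
  unfold matvec. rewrite (rsum_ext N _ (fun j => rsum m (fun k => c k * (V i j * f k j)))).
  - rewrite rsum_swap. apply rsum_ext; intros. now rewrite rsum_scal.
  - intros. rewrite <- rsum_scal. apply rsum_ext; intros; ring.
Qed.

Lemma dot_matvec_sym x y : symmetric N V -> dot N x (matvec N V y) = dot N (matvec N V x) y.
Proof.
  intros Hs. unfold dot, matvec.
  rewrite (rsum_ext N _ (fun i => rsum N (fun j => x i * V i j * y j))).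
  2:{ intros. rewrite <- rsum_scal. apply rsum_ext; intros; ring. }
  rewrite (rsum_ext N (fun i => rsum N (fun j => V i j * x j) * y i)
                      (fun i => rsum N (fun j => V i j * x j * y i))).
  2:{ intros. rewrite Rmult_comm, <- rsum_scal. apply rsum_ext; intros; ring. }
  rewrite rsum_swap. apply rsum_ext; intros. apply rsum_ext; intros. rewrite Hs by auto. ring.
Qed.

Lemma pos_def_nonneg x : pos_def N V -> 0 <= dot N x (matvec N V x).
Proof.
  intros Hpd. destruct (Classical_Prop.classic (nonzero_vec N x)) as [H|H].
  - now apply Rlt_le, Hpd.
  - unfold dot. rewrite rsum_zero; [lra|]. intros i Hi.
    destruct (Req_dec (x i) 0) as [->|Hx]; [ring|]. exfalso. apply H. now exists i.
Qed.

Lemma pos_def_eq0 x :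
  pos_def N V -> dot N x (matvec N V x) = 0 -> forall i, (i < N)%nat -> x i = 0.
Proof.
  intros Hpd H i Hi. destruct (Req_dec (x i) 0); auto. exfalso.
  assert (dot N x (matvec N V x) > 0) by (apply Hpd; now exists i). lra.
Qed.

End Vectors.

(** * Spans and Gram-Schmidt in [R^N] *)

Section Spans.
Variable N : nat.
Variable f : nat -> vec.

Definition in_span (m : nat) (x : vec) : Prop :=
  exists c, forall i, (i < N)%nat -> x i = rsum m (fun k => c k * f k i).

Lemma in_span_ext m x y :
  (forall i, (i < N)%nat -> x i = y i) -> in_span m x -> in_span m y.
Proof. intros H [c Hc]. exists c. intros. rewrite <- H by auto. auto. Qed.

Lemma in_span_zero m : in_span m (fun _ => 0).
Proof. exists (fun _ => 0). intros. symmetry; apply rsum_zero; intros; ring. Qed.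

Lemma in_span_plus m x y : in_span m x -> in_span m y -> in_span m (fun i => x i + y i).
Proof.
  intros [c Hc] [d Hd]. exists (fun k => c k + d k). intros.
  rewrite Hc, Hd, <- rsum_plus by auto. apply rsum_ext; intros; ring.
Qed.

Lemma in_span_scal m a x : in_span m x -> in_span m (fun i => a * x i).
Proof.
  intros [c Hc]. exists (fun k => a * c k). intros.
  rewrite Hc, <- rsum_scal by auto. apply rsum_ext; intros; ring.
Qed.

Lemma in_span_minus m x y : in_span m x -> in_span m y -> in_span m (fun i => x i - y i).
Proof.
  intros Hx Hy. apply (in_span_ext m (fun i => x i + (-1) * y i)); [intros; ring|].
  now apply in_span_plus, in_span_scal.
Qed.

Lemma in_span_gen m k : (k < m)%nat -> in_span m (f k).
Proof. intros Hk. exists (unitv k). intros. unfold unitv. now rewrite rsum_delta. Qed.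

Lemma in_span_widen m m' x : (m <= m')%nat -> in_span m x -> in_span m' x.
Proof.
  intros Hm [c Hc]. exists (fun k => if Nat.ltb k m then c k else 0). intros i Hi.
  rewrite Hc by auto. replace m' with (m + (m' - m))%nat by lia.
  rewrite rsum_add_range, (rsum_zero (m' - m)).
  - rewrite Rplus_0_r. apply rsum_ext. intros k Hk. now rewrite (proj2 (Nat.ltb_lt k m) Hk).
  - intros k _. rewrite (proj2 (Nat.ltb_ge (m + k) m)) by lia. ring.
Qed.

Lemma in_span_comb m n d g :
  (forall j, (j < n)%nat -> in_span m (g j)) -> in_span m (fun i => rsum n (fun j => d j * g j i)).
Proof.
  induction n as [|n IH]; intros H; simpl; [apply in_span_zero|].
  apply in_span_plus; [apply IH; intros; apply H; lia|]. apply in_span_scal, H; lia.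
Qed.

Lemma in_span_S_of_mem m x : in_span m (f m) -> in_span (S m) x -> in_span m x.
Proof.
  intros Hfm [c Hc]. apply (in_span_ext m (fun i => rsum (S m) (fun k => c k * f k i)));
    [intros; symmetry; auto|].
  apply in_span_comb. intros j Hj.
  destruct (Nat.eq_dec j m) as [->|]; [exact Hfm|]. apply in_span_gen; lia.
Qed.

Lemma dot_orth_span m z x :
  (forall k, (k < m)%nat -> dot N z (f k) = 0) -> in_span m x -> dot N z x = 0.
Proof.
  intros H [c Hc]. rewrite dot_comm, (dot_ext N x (fun i => rsum m (fun k => c k * f k i)) z z)
    by auto.
  rewrite dot_rsum_l. apply rsum_zero. intros. rewrite dot_comm, H by auto. ring.
Qed.

Lemma orth_proj_exists m x :
  exists y, in_span m y /\ forall k, (k < m)%nat -> dot N (fun i => x i - y i) (f k) = 0.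
Proof.
  revert x. induction m as [|m IH]; intros x.
  { exists (fun _ => 0). split; [apply in_span_zero | intros; lia]. }
  destruct (IH (f m)) as [y0 [Hy0 Hw]], (IH x) as [y1 [Hy1 Hr]].
  set (w := fun i => f m i - y0 i) in *. set (r := fun i => x i - y1 i) in *.
  assert (Hsplit : forall z, dot N z (f m) = dot N z w + dot N z y0).
  { intros z. rewrite !(dot_comm N z), <- dot_plus_l. apply dot_ext; auto. intros; unfold w; ring. }
  assert (Hr_fm : dot N r (f m) = dot N r w) by (rewrite Hsplit, (dot_orth_span m r y0); auto; ring).
  destruct (Req_dec (dot N w w) 0) as [Hw0|Hw0].
  - exists y1. split; [apply (in_span_widen m); [lia|auto]|]. intros k Hk.
    destruct (Nat.eq_dec k m) as [->|]; [|apply Hr; lia].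
    change (dot N r (f m) = 0). rewrite Hr_fm. apply dot_orth_span with m; [auto|].
    apply (in_span_ext m (fun _ => 0)); [|apply in_span_zero].
    intros i Hi. symmetry. now apply (dot_self_eq0 N).
  - set (lam := dot N r w / dot N w w).
    exists (fun i => y1 i + lam * w i). split.
    + apply in_span_plus; [apply (in_span_widen m); [lia|auto]|]. apply in_span_scal, in_span_minus.
      * apply in_span_gen; lia.
      * apply (in_span_widen m); [lia|auto].
    + assert (Hres : forall z, dot N (fun i => x i - (y1 i + lam * w i)) z
                               = dot N r z - lam * dot N w z).
      { intros z. rewrite <- dot_scal_l, <- dot_minus_l. apply dot_ext; auto. intros; unfold r; ring. }
      intros k Hk. rewrite Hres. destruct (Nat.eq_dec k m) as [->|].
      * rewrite Hr_fm, Hsplit, (dot_orth_span m w y0) by auto. unfold lam. field. auto.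
      * rewrite Hr, Hw by lia. ring.
Qed.

(* [w] is the Gram-Schmidt residual of [f m]. *)
Section Residual.
Variables (m : nat) (w : vec).
Hypothesis w_orth : forall k, (k < m)%nat -> dot N w (f k) = 0.
Hypothesis fm_minus_w : in_span m (fun i => f m i - w i).

Lemma orth_in_span_S_line r :
  in_span (S m) r -> (forall k, (k < m)%nat -> dot N r (f k) = 0) ->
  exists c, forall i, (i < N)%nat -> r i = c * w i.
Proof.
  intros [a Ha] Hr. exists (a m).
  set (u := fun i => r i - a m * w i).
  assert (Hu : in_span m u).
  { apply (in_span_ext m (fun i => rsum m (fun k => a k * f k i) + a m * (f m i - w i))).
    - intros i Hi. unfold u. rewrite Ha by auto. simpl. ring.
    - apply in_span_plus; [now exists a|]. now apply in_span_scal. }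
  assert (Huu : dot N u u = 0).
  { apply (dot_orth_span m); auto. intros k Hk. unfold u.
    rewrite (dot_ext N _ (fun i => r i + (- a m) * w i) (f k) (f k)) by (intros; ring || auto).
    rewrite dot_plus_l, dot_scal_l, Hr, w_orth by auto. ring. }
  intros i Hi. pose proof (dot_self_eq0 N u Huu i Hi). unfold u in *. lra.
Qed.

Lemma dot_fm_w : dot N w (f m) = dot N w w.
Proof.
  destruct fm_minus_w as [c Hc].
  rewrite (dot_ext N w w (f m) (fun i => w i + rsum m (fun k => c k * f k i))).
  - rewrite (dot_comm N w (fun i => _ + _)), dot_plus_l, (dot_comm N (fun i => rsum _ _) w).
    rewrite (dot_orth_span m w (fun i => rsum _ _)); [ring|auto|now exists c].
  - auto.
  - intros i Hi. rewrite <- Hc by auto. ring.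
Qed.

End Residual.

Definition coord_sq (m : nat) (x : vec) : R := rsum m (fun k => dot N x (f k) * dot N x (f k)).

Lemma coord_sq_nonneg m x : 0 <= coord_sq m x.
Proof. apply rsum_nonneg. intros; apply sq_nonneg. Qed.

Lemma coord_sq_ext m x y :
  (forall k, (k < m)%nat -> dot N x (f k) = dot N y (f k)) -> coord_sq m x = coord_sq m y.
Proof. intros H. apply rsum_ext. intros k Hk. now rewrite H. Qed.

Lemma norm_split_bound b K F W S a Y Z :
  0 <= K -> 0 <= F -> 0 < W -> 0 <= S -> 0 <= Z -> Y <= K * S -> b * b <= K * S * F ->
  Z * W <= (a - b) * (a - b) ->
  Y + Z <= (K + (2 + 2 * K * F) / W) * (S + a * a).
Proof.
  intros HK HF HW HS HZ HY Hb HZW. set (iw := / W).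
  assert (Hiw : 0 < iw) by now apply Rinv_0_lt_compat.
  assert (HZ' : Z <= (2 * (a * a) + 2 * (K * S * F)) * iw).
  { replace Z with (Z * W * iw) by (unfold iw; field; lra). apply Rmult_le_compat_r; [lra|].
    pose proof (sq_add_le a (- b)). replace (a - b) with (a + - b) in HZW by ring. nra. }
  assert (0 <= iw * (2 * S + 2 * (K * F * (a * a)))).
  { apply Rmult_le_pos; [lra|]. pose proof (sq_nonneg a).
    assert (0 <= K * F * (a * a)) by (apply Rmult_le_pos; [apply Rmult_le_pos|]; auto). lra. }
  assert (K * S <= K * (S + a * a)) by (pose proof (sq_nonneg a); nra).
  unfold Rdiv. fold iw. nra.
Qed.

Lemma span_norm_bound_S m w K :
  (forall k, (k < m)%nat -> dot N w (f k) = 0) -> in_span m (fun i => f m i - w i) ->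
  0 < dot N w w -> 0 <= K -> (forall x, in_span m x -> dot N x x <= K * coord_sq m x) ->
  forall x, in_span (S m) x ->
  dot N x x <= (K + (2 + 2 * K * dot N (f m) (f m)) / dot N w w) * coord_sq (S m) x.
Proof.
  intros Hw Hfw Hww HK IH x Hx.
  destruct (orth_proj_exists m x) as [y [Hy Hr]].
  set (r := fun i => x i - y i) in *.
  destruct (orth_in_span_S_line m w Hw Hfw r) as [c Hc]; auto.
  { apply in_span_minus; [auto|]. apply (in_span_widen m); [lia|auto]. }
  assert (Hyw : dot N y w = 0) by (rewrite dot_comm; now apply (dot_orth_span m)).
  assert (Hxyw : forall i, (i < N)%nat -> x i = y i + c * w i).
  { intros i Hi. rewrite <- Hc by auto. unfold r. ring. }
  assert (Hpyth : dot N x x = dot N y y + c * c * dot N w w).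
  { rewrite (dot_ext N x _ x _ Hxyw Hxyw), dot_expand, Hyw. ring. }
  assert (Hrfm : dot N x (f m) - dot N y (f m) = c * dot N w w).
  { rewrite <- dot_minus_l, <- (dot_fm_w m w Hw Hfw), <- dot_scal_l.
    apply dot_ext; auto. }
  set (Sx := coord_sq m x). set (a := dot N x (f m)). set (F := dot N (f m) (f m)).
  assert (HyS : dot N y y <= K * Sx).
  { unfold Sx. rewrite <- (coord_sq_ext m y x); [now apply IH|].
    intros k Hk. pose proof (Hr k Hk) as Hk'. unfold r in Hk'. rewrite dot_minus_l in Hk'. lra. }
  assert (Hyfm : dot N y (f m) * dot N y (f m) <= K * Sx * F).
  { pose proof (dot_Cauchy_Schwarz N y (f m)) as HCS. change (dot N (f m) (f m)) with F in HCS.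
    assert (0 <= F) by apply dot_nonneg. nra. }
  change (coord_sq (S m) x) with (Sx + a * a). rewrite Hpyth.
  apply (norm_split_bound (dot N y (f m))); auto.
  - apply dot_nonneg.
  - apply coord_sq_nonneg.
  - apply Rmult_le_pos; [apply sq_nonneg|lra].
  - replace (a - dot N y (f m)) with (c * dot N w w) by (unfold a; lra). lra.
Qed.

Lemma span_norm_bound m :
  exists K, 0 <= K /\ forall x, in_span m x -> dot N x x <= K * coord_sq m x.
Proof.
  induction m as [|m [K [HK IH]]].
  { exists 0. split; [lra|]. intros x [c Hc].
    rewrite (dot_ext N x (fun _ => 0) x (fun _ => 0)), dot_zero_r by auto. lra. }
  destruct (orth_proj_exists m (f m)) as [y0 [Hy0 Hw]].
  set (w := fun i => f m i - y0 i) in *.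
  assert (Hfw : in_span m (fun i => f m i - w i)).
  { apply (in_span_ext m y0); auto. intros; unfold w; ring. }
  destruct (Req_dec (dot N w w) 0) as [Hw0|Hw0].
  - exists K. split; auto. intros x Hx.
    assert (Hfm : in_span m (f m)).
    { apply (in_span_ext m y0); auto. intros i Hi. pose proof (dot_self_eq0 N w Hw0 i Hi).
      unfold w in *. lra. }
    eapply Rle_trans; [now apply IH, (in_span_S_of_mem m)|].
    apply Rmult_le_compat_l; auto. unfold coord_sq; simpl.
    pose proof (sq_nonneg (dot N x (f m))). lra.
  - eexists. split; [|apply (span_norm_bound_S m w K Hw Hfw); auto; pose proof (dot_nonneg N w); lra].
    apply Rplus_le_le_0_compat; auto. apply Rle_mult_inv_pos.
    + pose proof (dot_nonneg N (f m)). nra.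
    + pose proof (dot_nonneg N w). lra.
Qed.

Lemma bessel (u : nat -> vec) n x :
  (forall j l, (j < n)%nat -> (l < n)%nat -> j <> l -> dot N (u j) (u l) = 0) ->
  (forall j, (j < n)%nat -> 0 < dot N (u j) (u j)) ->
  rsum n (fun j => dot N x (u j) * dot N x (u j) / dot N (u j) (u j)) <= dot N x x.
Proof.
  intros Horth Hpos. set (a := fun j => dot N x (u j) / dot N (u j) (u j)).
  assert (Hres : forall n', (n' <= n)%nat ->
    dot N (fun i => x i - rsum n' (fun j => a j * u j i)) (fun i => x i - rsum n' (fun j => a j * u j i))
    = dot N x x - rsum n' (fun j => dot N x (u j) * dot N x (u j) / dot N (u j) (u j))).
  { induction n' as [|n' IH]; intros Hn.
    - simpl. rewrite Rminus_0_r. apply dot_ext; intros; ring.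
    - set (r := fun i => x i - rsum n' (fun j => a j * u j i)).
      simpl. rewrite (dot_ext N _ (fun i => r i + (- a n') * u n' i) _ (fun i => r i + (- a n') * u n' i))
        by (intros; unfold r; ring).
      rewrite dot_expand. unfold r at 1 2. rewrite IH by lia.
      assert (Hr : dot N r (u n') = dot N x (u n')).
      { unfold r. rewrite dot_minus_l, dot_rsum_l, rsum_zero; [ring|].
        intros. rewrite Horth by lia. ring. }
      rewrite Hr. unfold a. field. apply Rgt_not_eq, Hpos. lia. }
  pose proof (Hres n (le_n n)). pose proof (dot_nonneg N (fun i => x i - rsum n (fun j => a j * u j i))).
  lra.
Qed.

(* Summing Bessel's inequality over the standard basis gives [N + 1 <= N]. *)
Lemma orthogonal_family_too_large (u : nat -> vec) :
  (forall j l, (j < S N)%nat -> (l < S N)%nat -> j <> l -> dot N (u j) (u l) = 0) ->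
  (forall j, (j < S N)%nat -> 0 < dot N (u j) (u j)) -> False.
Proof.
  intros Horth Hpos.
  assert (Hsum : rsum N (fun i => rsum (S N) (fun j =>
                   dot N (unitv i) (u j) * dot N (unitv i) (u j) / dot N (u j) (u j)))
                 <= rsum N (fun _ => 1)).
  { apply rsum_le. intros i Hi.
    replace 1 with (dot N (unitv i) (unitv i)) by (rewrite dot_unitv by auto; unfold unitv;
      now rewrite Nat.eqb_refl).
    now apply bessel. }
  rewrite rsum_swap, (rsum_ext (S N) _ (fun _ => 1)) in Hsum.
  - assert (Hconst : forall n, rsum n (fun _ => 1) = INR n).
    { induction n as [|n IH]; [reflexivity|]. rewrite S_INR, <- IH. reflexivity. }
    rewrite !Hconst, S_INR in Hsum. lra.
  - intros j Hj. specialize (Hpos j Hj).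
    rewrite (rsum_ext N _ (fun i => / dot N (u j) (u j) * (u j i * u j i))).
    + rewrite rsum_scal. fold (dot N (u j) (u j)). field. lra.
    + intros i Hi. rewrite dot_unitv by auto. field. lra.
Qed.

(* Some [f m] with [m <= N] depends linearly on its predecessors: otherwise the
   Gram-Schmidt residuals of [f 0, ..., f N] would be [N + 1] orthogonal nonzero vectors. *)
Lemma span_saturates : exists m, (m <= N)%nat /\ in_span m (f m).
Proof.
  apply Classical_Prop.NNPP. intros Hn.
  set (proj := fun m x => proj1_sig (constructive_indefinite_description _ (orth_proj_exists m x))).
  assert (Hproj : forall m x, in_span m (proj m x) /\
            forall k, (k < m)%nat -> dot N (fun i => x i - proj m x i) (f k) = 0).
  { intros. unfold proj. now destruct constructive_indefinite_description. }
  set (res := fun m i => f m i - proj m (f m) i).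
  assert (Hres_span : forall j, in_span (S j) (res j)).
  { intros. apply in_span_minus; [apply in_span_gen; lia|].
    apply (in_span_widen j); [lia|apply Hproj]. }
  assert (Horth : forall j l, (j < l)%nat -> dot N (res l) (res j) = 0).
  { intros. apply (dot_orth_span l); [apply Hproj|]. apply (in_span_widen (S j)); auto. }
  apply (orthogonal_family_too_large res).
  - intros j l Hj Hl Hjl. destruct (Nat.lt_ge_cases j l).
    + rewrite dot_comm. now apply Horth.
    + apply Horth. lia.
  - intros j Hj. destruct (Rle_lt_or_eq_dec 0 _ (dot_nonneg N (res j))) as [|Hz]; auto. exfalso.
    apply Hn. exists j. split; [lia|]. apply (in_span_ext j (proj j (f j))); [|apply Hproj].
    intros i Hi. pose proof (dot_self_eq0 N (res j) (eq_sym Hz) i Hi). unfold res in *. lra.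
Qed.

End Spans.

(** * The Krylov space [l_V] *)

Section KrylovSpace.
Variable N : nat.
Variable V : nat -> nat -> R.
Hypothesis Hsym : symmetric N V.
Hypothesis Hpd : pos_def N V.

Notation VE := (Vke1 N V).
Notation lV := (in_lV N V).

Lemma in_lV_ext x y : (forall i, (i < N)%nat -> x i = y i) -> lV x -> lV y.
Proof. intros H [m Hm]. exists m. now apply (in_span_ext N VE m x). Qed.

Lemma in_lV_zero : lV (fun _ => 0).
Proof. exists 0%nat. apply in_span_zero. Qed.

Lemma in_lV_plus x y : lV x -> lV y -> lV (fun i => x i + y i).
Proof.
  intros [m1 H1] [m2 H2]. exists (max m1 m2).
  apply in_span_plus; [apply (in_span_widen N VE m1) | apply (in_span_widen N VE m2)]; auto; lia.
Qed.

Lemma in_lV_scal a x : lV x -> lV (fun i => a * x i).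
Proof. intros [m H]. exists m. now apply in_span_scal. Qed.

Lemma in_lV_minus x y : lV x -> lV y -> lV (fun i => x i - y i).
Proof. intros [m1 H1] [m2 H2]. exists (max m1 m2).
  apply in_span_minus; [apply (in_span_widen N VE m1) | apply (in_span_widen N VE m2)]; auto; lia.
Qed.

Lemma in_lV_opp x : lV x -> lV (fun i => - x i).
Proof. intros. apply (in_lV_ext (fun i => (-1) * x i)); [intros; ring|]. now apply in_lV_scal. Qed.

Lemma in_lV_Vke1 k : lV (VE k).
Proof. exists (S k). apply in_span_gen. lia. Qed.

Lemma in_lV_e1 : lV e1.
Proof. exact (in_lV_Vke1 0). Qed.

Lemma in_lV_of_span f m x : (forall k, (k < m)%nat -> lV (f k)) -> in_span N f m x -> lV x.
Proof.
  intros Hf [c Hc]. apply (in_lV_ext (fun i => rsum m (fun k => c k * f k i)));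
    [intros; symmetry; auto|].
  clear Hc. induction m as [|m IH]; simpl; [apply in_lV_zero|].
  apply in_lV_plus; [apply IH; intros; apply Hf; lia|]. apply in_lV_scal, Hf. lia.
Qed.

Lemma in_lV_matvec x : lV x -> lV (matvec N V x).
Proof.
  intros [m [c Hc]]. apply (in_lV_ext (fun i => rsum m (fun k => c k * VE (S k) i))).
  - intros i Hi. rewrite (matvec_ext N V x _ Hc). symmetry. apply matvec_rsum.
  - apply (in_lV_of_span (fun k => VE (S k)) m); [intros; apply in_lV_Vke1|]. now exists c.
Qed.

Lemma lV_finite_span : exists m, forall x, lV x -> in_span N VE m x.
Proof.
  destruct (span_saturates N VE) as [m [_ Hm]]. exists m.
  assert (Hle : forall j, (j <= m)%nat -> in_span N VE m (VE j)).
  { intros j Hj. destruct (Nat.eq_dec j m) as [->|]; [auto|]. apply in_span_gen; lia. }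
  assert (Hall : forall k, in_span N VE m (VE k)).
  { induction k as [|k [c Hc]]; [apply Hle; lia|].
    apply (in_span_ext N VE m (fun i => rsum m (fun j => c j * VE (S j) i))).
    - intros i Hi. simpl. rewrite (matvec_ext N V (VE k) _ Hc). symmetry. apply matvec_rsum.
    - apply in_span_comb. intros; apply Hle; lia. }
  intros x [m' [c Hc]]. apply (in_span_ext N VE m (fun i => rsum m' (fun k => c k * VE k i)));
    [intros; symmetry; auto|].
  apply in_span_comb. intros; apply Hall.
Qed.

(* Positive definiteness makes [V] injective on [l_V], so [V l_V = l_V]. *)
Lemma lV_shift_span : exists m, forall x, lV x -> in_span N (fun k => VE (S k)) m x.
Proof.
  destruct lV_finite_span as [m Hm]. exists m. intros x Hx.
  destruct (orth_proj_exists N (fun k => VE (S k)) m x) as [y [Hy Horth]].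
  assert (Hz : lV (fun i => x i - y i)).
  { apply in_lV_minus; auto. apply (in_lV_of_span (fun k => VE (S k)) m); auto.
    intros; apply in_lV_Vke1. }
  set (z := fun i => x i - y i) in *.
  assert (Hvv : dot N (matvec N V z) (matvec N V z) = 0).
  { apply (dot_orth_span N VE m).
    - intros k Hk. rewrite <- dot_matvec_sym by auto. apply (Horth k Hk).
    - now apply Hm, in_lV_matvec. }
  assert (Hz0 : forall i, (i < N)%nat -> z i = 0).
  { apply (pos_def_eq0 N V z Hpd). unfold dot. apply rsum_zero. intros i Hi.
    rewrite (dot_self_eq0 N _ Hvv) by auto. ring. }
  apply (in_span_ext N _ m y); auto. intros i Hi. specialize (Hz0 i Hi). unfold z in Hz0. lra.
Qed.

Lemma in_lV_orth_Vke1_S z :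
  lV z -> (forall k, dot N z (VE (S k)) = 0) -> forall i, (i < N)%nat -> z i = 0.
Proof.
  intros Hz Horth. destruct lV_shift_span as [m Hm]. apply (dot_self_eq0 N).
  apply (dot_orth_span N (fun k => VE (S k)) m); auto.
Qed.

Lemma lV_orth_decomp x : exists y z, lV y /\ (forall w, lV w -> dot N z w = 0) /\
  (forall i, (i < N)%nat -> x i = y i + z i).
Proof.
  destruct lV_finite_span as [m Hm]. destruct (orth_proj_exists N VE m x) as [y [Hy Horth]].
  exists y, (fun i => x i - y i). split; [|split].
  - apply (in_lV_of_span VE m); auto. intros; apply in_lV_Vke1.
  - intros w Hw. apply (dot_orth_span N VE m); auto.
  - intros; ring.
Qed.

Lemma in_lV_of_orth x : (forall w, (forall u, lV u -> dot N w u = 0) -> dot N x w = 0) -> lV x.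
Proof.
  intros H. destruct (lV_orth_decomp x) as [y [z [Hy [Hz Hxyz]]]].
  assert (Hxz := H z Hz).
  rewrite (dot_ext N x (fun i => y i + z i) z z), dot_plus_l, dot_comm, Hz in Hxz by auto.
  apply (in_lV_ext y); auto. intros i Hi.
  rewrite Hxyz, (dot_self_eq0 N z ltac:(lra)) by auto. ring.
Qed.

Lemma lV_norm_bound : exists m K, 0 <= K /\
  forall x, lV x -> dot N x x <= K * coord_sq N (fun k => VE (S k)) m x.
Proof.
  destruct lV_shift_span as [m Hm]. destruct (span_norm_bound N (fun k => VE (S k)) m) as [K [HK Hb]].
  exists m, K. split; auto.
Qed.

End KrylovSpace.

(** * Energy, invariant subspaces and observability *)

Definition energy (N : nat) (V : nat -> nat -> R) (x y : state) : R :=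
  dot N (snd x) (snd y) + dot N (fst x) (matvec N V (fst y)).

(* The output [p_1] of [A^j x], i.e. the [j]-th time derivative of [p_1] along the flow. *)
Definition obs (N : nat) (V : nat -> nat -> R) (alpha : R) (j : nat) (x : state) : R :=
  snd (Apow N V alpha j x) 0%nat.

Section DampedOscillator.
Variable N : nat.
Variable V : nat -> nat -> R.
Variable alpha : R.
Hypothesis HN : (1 <= N)%nat.
Hypothesis Hsym : symmetric N V.
Hypothesis Hpd : pos_def N V.
Hypothesis Halpha : alpha > 0.

Notation VE := (Vke1 N V).
Notation A := (Aop N V alpha).
Notation B := (energy N V).

Lemma st_eq_refl x : st_eq N x x.
Proof. now intros i Hi. Qed.

Lemma st_eq_trans x y z : st_eq N x y -> st_eq N y z -> st_eq N x z.
Proof. intros H1 H2 i Hi. destruct (H1 i Hi), (H2 i Hi); split; congruence. Qed.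

Lemma Aop_ext x y : st_eq N x y -> st_eq N (A x) (A y).
Proof.
  intros H i Hi. simpl. split; [apply H; auto|].
  rewrite (matvec_ext N V (fst x) (fst y)) by (intros; apply H; auto).
  destruct (H 0%nat) as [_ ->]; [lia|]. reflexivity.
Qed.

Lemma Apow_ext j x y : st_eq N x y -> st_eq N (Apow N V alpha j x) (Apow N V alpha j y).
Proof. induction j; intros H; simpl; [exact H|]. now apply Aop_ext, IHj. Qed.

Lemma Apow_add j k x : Apow N V alpha j (Apow N V alpha k x) = Apow N V alpha (j + k) x.
Proof. unfold Apow. now rewrite Nat.iter_add. Qed.

Lemma Apow_Aop k x : Apow N V alpha k (A x) = A (Apow N V alpha k x).
Proof. change (A x) with (Apow N V alpha 1 x). now rewrite Apow_add, Nat.add_1_r. Qed.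

Lemma Ham_energy x : Ham N V x = / 2 * B x x.
Proof. unfold Ham, energy. ring. Qed.

Lemma energy_sym x y : B x y = B y x.
Proof. unfold energy. now rewrite (dot_comm N (snd x)), dot_matvec_sym, (dot_comm N (fst y)). Qed.

Lemma energy_ext x x' y y' : st_eq N x x' -> st_eq N y y' -> B x y = B x' y'.
Proof.
  intros H1 H2. unfold energy. f_equal.
  - apply dot_ext; intros; [apply H1|apply H2]; auto.
  - apply dot_ext; intros; [apply H1; auto|]. apply matvec_ext. intros; apply H2; auto.
Qed.

Lemma Ham_ext x y : st_eq N x y -> Ham N V x = Ham N V y.
Proof. intros H. now rewrite !Ham_energy, (energy_ext x y x y). Qed.

Lemma energy_lin_r x a y b z : B x (st_lin a y b z) = a * B x y + b * B x z.
Proof.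
  unfold energy, st_lin. simpl.
  rewrite (dot_comm N (snd x)), dot_plus_l, !dot_scal_l, !(dot_comm N _ (snd x)).
  rewrite (dot_ext N (fst x) (fst x) _ (fun i => a * matvec N V (fst y) i + b * matvec N V (fst z) i)).
  - rewrite (dot_comm N (fst x)), dot_plus_l, !dot_scal_l, !(dot_comm N _ (fst x)). ring.
  - auto.
  - intros. now rewrite matvec_plus, !matvec_scal.
Qed.

Lemma energy_nonneg x : 0 <= B x x.
Proof. unfold energy. pose proof (dot_nonneg N (snd x)). pose proof (pos_def_nonneg N V (fst x) Hpd). lra. Qed.

Lemma Ham_nonneg x : 0 <= Ham N V x.
Proof. rewrite Ham_energy. pose proof (energy_nonneg x). lra. Qed.

Lemma energy_pos x : st_nonzero N x -> 0 < B x x.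
Proof.
  intros Hx. unfold energy. pose proof (dot_nonneg N (snd x)).
  pose proof (pos_def_nonneg N V (fst x) Hpd).
  destruct Hx as [Hq|Hp]; [specialize (Hpd _ Hq)|pose proof (dot_self_pos N _ Hp)]; lra.
Qed.

Lemma energy_Cauchy_Schwarz x y : B x y * B x y <= B x x * B y y.
Proof.
  apply discriminant_le; [apply energy_nonneg|]. intros l.
  pose proof (energy_nonneg (st_lin 1 x (- l) y)) as H.
  rewrite energy_lin_r, !(energy_sym (st_lin 1 x (- l) y)), !energy_lin_r, (energy_sym y x) in H.
  lra.
Qed.

Lemma dot_snd_Aop x z :
  dot N (snd (A x)) z = - dot N (matvec N V (fst x)) z - alpha * snd x 0%nat * z 0%nat.
Proof. simpl. now rewrite dot_minus_l, dot_opp_l, dot_scal_e1_l. Qed.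

Lemma energy_Aop x y : B (A x) y + B x (A y) = -2 * alpha * snd x 0%nat * snd y 0%nat.
Proof.
  unfold energy. rewrite dot_snd_Aop, (dot_comm N (snd x) (snd (A y))), dot_snd_Aop. simpl fst.
  rewrite (dot_matvec_sym N V (fst x) (snd y)), (dot_comm N (matvec N V (fst y)) (snd x)) by auto.
  ring.
Qed.

Lemma energy_Aop_diag x : B x (A x) = - alpha * snd x 0%nat * snd x 0%nat.
Proof. pose proof (energy_Aop x x). rewrite energy_sym in H. lra. Qed.

Lemma Lminus_Aop psi : in_Lminus N V psi -> in_Lminus N V (A psi).
Proof.
  intros [Hq Hp]. split; simpl; auto.
  apply (in_lV_ext N V (fun i => - matvec N V (fst psi) i - (alpha * snd psi 0%nat) * e1 i)).
  - intros i _. unfold e1. destruct (Nat.eqb i 0); ring.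
  - apply in_lV_minus; [now apply in_lV_opp, in_lV_matvec|]. apply in_lV_scal, in_lV_e1.
Qed.

Lemma L0_Aop psi : in_L0 N V psi -> in_L0 N V (A psi).
Proof.
  intros Hpsi phi [Hq Hp]. unfold dot2.
  assert (H1 : dot2 N psi (fun i => - matvec N V (snd phi) i, fst phi) = 0).
  { apply Hpsi. split; simpl; auto. now apply in_lV_opp, in_lV_matvec. }
  assert (H2 : dot2 N psi (fun _ => 0, e1) = 0).
  { apply Hpsi. split; simpl; [apply in_lV_zero|apply in_lV_e1]. }
  unfold dot2 in H1, H2. simpl in H1, H2. rewrite dot_e1, dot_zero_r in H2 by auto.
  rewrite (dot_comm N (fst psi)), dot_opp_l, <- dot_matvec_sym, (dot_comm N (snd phi)) in H1 by auto.
  rewrite dot_snd_Aop. simpl fst. rewrite (Rplus_0_l) in H2. rewrite H2. lra.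
Qed.

Lemma Lminus_Apow k psi : in_Lminus N V psi -> in_Lminus N V (Apow N V alpha k psi).
Proof. induction k; intros H; simpl; auto. now apply Lminus_Aop, IHk. Qed.

Lemma L0_Apow k psi : in_L0 N V psi -> in_L0 N V (Apow N V alpha k psi).
Proof. induction k; intros H; simpl; auto. now apply L0_Aop, IHk. Qed.

Lemma dot_Vke1_S_eigvec w lam :
  (forall i, (i < N)%nat -> matvec N V w i = lam * w i) -> lam * w 0%nat = 0 ->
  forall k, dot N w (VE (S k)) = 0.
Proof.
  intros Hw Hw0.
  assert (Hpow : forall k, dot N w (VE k) = lam ^ k * w 0%nat).
  { induction k as [|k IH]; simpl; [rewrite dot_e1 by auto; ring|].
    rewrite dot_matvec_sym, (dot_ext N _ (fun i => lam * w i) (VE k) (VE k)), dot_scal_l, IH by auto.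
    ring. }
  intros k. rewrite Hpow. simpl. rewrite Rmult_comm, <- Rmult_assoc, (Rmult_comm _ lam), Hw0. ring.
Qed.

(* On [L_-] there are no purely imaginary eigenvalues [i b]: with [p_1 = 0] the eigenvector
   would consist of eigenvectors of [V] orthogonal to [l_V]. *)
Lemma no_imaginary_eigvec u v b :
  in_Lminus N V u -> in_Lminus N V v ->
  st_eq N (A u) (st_lin 0 u (- b) v) -> st_eq N (A v) (st_lin b u 0 v) ->
  snd u 0%nat = 0 -> snd v 0%nat = 0 -> ~ (st_nonzero N u \/ st_nonzero N v).
Proof.
  intros [Huq _] [Hvq _] Hu Hv Hu0 Hv0.
  assert (Eup : forall i, (i < N)%nat -> snd u i = - b * fst v i).
  { intros i Hi. destruct (Hu i Hi) as [E _]. simpl in E. rewrite E. ring. }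
  assert (Evp : forall i, (i < N)%nat -> snd v i = b * fst u i).
  { intros i Hi. destruct (Hv i Hi) as [E _]. simpl in E. rewrite E. ring. }
  assert (EVu : forall i, (i < N)%nat -> matvec N V (fst u) i = b * b * fst u i).
  { intros i Hi. destruct (Hu i Hi) as [_ E]. simpl in E. rewrite Hu0, Evp in E by auto.
    destruct (Nat.eqb i 0); lra. }
  assert (EVv : forall i, (i < N)%nat -> matvec N V (fst v) i = b * b * fst v i).
  { intros i Hi. destruct (Hv i Hi) as [_ E]. simpl in E. rewrite Hv0, Eup in E by auto.
    destruct (Nat.eqb i 0); lra. }
  assert (Zu : forall i, (i < N)%nat -> fst u i = 0).
  { apply (in_lV_orth_Vke1_S N V); auto. apply (dot_Vke1_S_eigvec _ (b * b)); auto.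
    rewrite Rmult_assoc, <- Evp, Hv0 by lia. ring. }
  assert (Zv : forall i, (i < N)%nat -> fst v i = 0).
  { apply (in_lV_orth_Vke1_S N V); auto. apply (dot_Vke1_S_eigvec _ (b * b)); auto.
    rewrite Rmult_assoc. replace (b * fst v 0%nat) with (- snd u 0%nat) by (rewrite Eup by lia; ring).
    rewrite Hu0. ring. }
  intros [[[i [Hi Hn]]|[i [Hi Hn]]]|[[i [Hi Hn]]|[i [Hi Hn]]]]; apply Hn.
  - auto.
  - rewrite Eup, Zv by auto. ring.
  - auto.
  - rewrite Evp, Zu by auto. ring.
Qed.

Lemma eigvec_energy_balance u v a b :
  st_eq N (A u) (st_lin a u (- b) v) -> st_eq N (A v) (st_lin b u a v) ->
  a * (B u u + B v v) = - alpha * (snd u 0%nat * snd u 0%nat + snd v 0%nat * snd v 0%nat).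
Proof.
  intros Hu Hv.
  assert (E1 : B u (A u) = a * B u u + (- b) * B u v)
    by (rewrite (energy_ext u u _ _ (st_eq_refl u) Hu); apply energy_lin_r).
  assert (E2 : B v (A v) = b * B v u + a * B v v)
    by (rewrite (energy_ext v v _ _ (st_eq_refl v) Hv); apply energy_lin_r).
  rewrite energy_Aop_diag in E1, E2. rewrite (energy_sym v u) in E2. lra.
Qed.

Lemma eigenvalue_Aminus_neg a b : eigenvalue_Aminus N V alpha a b -> a < 0.
Proof.
  intros [u [v [Hu [Hv [Hnz [HAu HAv]]]]]].
  pose proof (eigvec_energy_balance u v a b HAu HAv) as Hbal.
  assert (Hpos : 0 < B u u + B v v).
  { pose proof (energy_nonneg u). pose proof (energy_nonneg v).
    destruct Hnz as [Hn|Hn]; pose proof (energy_pos _ Hn); lra. }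
  pose proof (sq_nonneg (snd u 0%nat)). pose proof (sq_nonneg (snd v 0%nat)).
  destruct (Rlt_or_le a 0) as [|Ha]; auto. exfalso.
  assert (Hsq : snd u 0%nat * snd u 0%nat + snd v 0%nat * snd v 0%nat = 0).
  { assert (0 <= a * (B u u + B v v)) by (apply Rmult_le_pos; lra). nra. }
  assert (Hu0 : snd u 0%nat = 0) by nra. assert (Hv0 : snd v 0%nat = 0) by nra.
  assert (Ha0 : a = 0) by nra. subst a.
  exact (no_imaginary_eigvec u v b Hu Hv HAu HAv Hu0 Hv0 Hnz).
Qed.

Notation Y := (obs N V alpha).

Definition obs_sum (n : nat) (z : state) : R := rsum n (fun j => Y j z * Y j z).

Lemma obs_sum_nonneg n z : 0 <= obs_sum n z.
Proof. apply rsum_nonneg. intros; apply sq_nonneg. Qed.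

Lemma obs_sum_le_len n m z : (n <= m)%nat -> obs_sum n z <= obs_sum m z.
Proof. apply (rsum_le_len (fun j => Y j z * Y j z)). intros; apply sq_nonneg. Qed.

Lemma obs_sq_le_sum n j z : (j < n)%nat -> Y j z * Y j z <= obs_sum n z.
Proof. apply (rsum_term_le (fun j => Y j z * Y j z)). intros; apply sq_nonneg. Qed.

Lemma obs_sum_Apow s n z : obs_sum n (Apow N V alpha s z) <= obs_sum (s + n) z.
Proof.
  unfold obs_sum, obs. rewrite (rsum_ext n _ (fun j => (fun j => Y j z * Y j z) (s + j)%nat)).
  - apply (rsum_le_range (fun j => Y j z * Y j z)). intros; apply sq_nonneg.
  - intros j _. unfold obs. rewrite Apow_add, Nat.add_comm. reflexivity.
Qed.

Lemma dot_fst_Vke1_S z k :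
  dot N (fst z) (VE (S k)) = - dot N (snd (A z)) (VE k) - alpha * Y 0 z * VE k 0%nat.
Proof.
  change (VE (S k)) with (matvec N V (VE k)). rewrite dot_matvec_sym, dot_snd_Aop by auto.
  unfold obs. simpl. ring.
Qed.

Lemma dot_snd_Vke1_S z k :
  dot N (snd z) (VE (S k)) = - dot N (snd (Apow N V alpha 2 z)) (VE k) - alpha * Y 1 z * VE k 0%nat.
Proof. exact (dot_fst_Vke1_S (A z) k). Qed.

Lemma sq_recursion_bound X Y o c G T :
  X = - Y - alpha * o * c -> Y * Y <= G * T -> o * o <= T -> 0 <= G ->
  X * X <= (2 * G + 2 * ((alpha * c) * (alpha * c))) * T.
Proof.
  intros -> HY Ho HG. pose proof (sq_add_le (- Y) (- (alpha * c * o))).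
  pose proof (sq_nonneg (alpha * c)).
  replace (- Y - alpha * o * c) with (- Y + - (alpha * c * o)) by ring. nra.
Qed.

Lemma dot_snd_Vke1_obs_bound k : exists G, 0 <= G /\
  forall z, dot N (snd z) (VE k) * dot N (snd z) (VE k) <= G * obs_sum (2 * k + 1) z.
Proof.
  induction k as [|k [G [HG IH]]].
  - exists 1. split; [lra|]. intros z. simpl. rewrite dot_e1 by auto.
    pose proof (obs_sq_le_sum 1 0 z ltac:(lia)). unfold obs in *. simpl in *. lra.
  - exists (2 * G + 2 * ((alpha * VE k 0%nat) * (alpha * VE k 0%nat))).
    split; [pose proof (sq_nonneg (alpha * VE k 0%nat)); lra|]. intros z.
    apply (sq_recursion_bound _ (dot N (snd (Apow N V alpha 2 z)) (VE k)) (Y 1 z)); auto.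
    + apply dot_snd_Vke1_S.
    + eapply Rle_trans; [apply IH|]. apply Rmult_le_compat_l; auto.
      replace (2 * S k + 1)%nat with (2 + (2 * k + 1))%nat by lia. apply obs_sum_Apow.
    + apply obs_sq_le_sum. lia.
Qed.

Lemma dot_fst_Vke1_obs_bound k : exists G, 0 <= G /\
  forall z, dot N (fst z) (VE (S k)) * dot N (fst z) (VE (S k)) <= G * obs_sum (2 * k + 2) z.
Proof.
  destruct (dot_snd_Vke1_obs_bound k) as [G [HG Hb]].
  exists (2 * G + 2 * ((alpha * VE k 0%nat) * (alpha * VE k 0%nat))).
  split; [pose proof (sq_nonneg (alpha * VE k 0%nat)); lra|]. intros z.
  apply (sq_recursion_bound _ (dot N (snd (A z)) (VE k)) (Y 0 z)); auto.
  - apply dot_fst_Vke1_S.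
  - eapply Rle_trans; [apply (Hb (A z))|]. apply Rmult_le_compat_l; auto.
    replace (2 * k + 2)%nat with (1 + (2 * k + 1))%nat by lia. apply (obs_sum_Apow 1).
  - apply obs_sq_le_sum. lia.
Qed.

Notation coords m x := (coord_sq N (fun k => VE (S k)) m x).

Lemma coords_obs_bound m : exists G, 0 <= G /\
  forall z, coords m (fst z) + coords m (snd z) <= G * obs_sum (2 * m + 1) z.
Proof.
  induction m as [|m [G [HG IH]]].
  { exists 0. split; [lra|]. intros; unfold coord_sq; simpl. lra. }
  destruct (dot_fst_Vke1_obs_bound m) as [Gq [HGq Hq]].
  destruct (dot_snd_Vke1_obs_bound (S m)) as [Gp [HGp Hp]].
  exists (G + Gq + Gp). split; [lra|]. intros z. unfold coord_sq. cbn [rsum].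
  specialize (IH z). specialize (Hq z). specialize (Hp z). unfold coord_sq in IH.
  assert (G * obs_sum (2 * m + 1) z <= G * obs_sum (2 * S m + 1) z)
    by (apply Rmult_le_compat_l, obs_sum_le_len; auto; lia).
  assert (Gq * obs_sum (2 * m + 2) z <= Gq * obs_sum (2 * S m + 1) z)
    by (apply Rmult_le_compat_l, obs_sum_le_len; auto; lia).
  lra.
Qed.

(* By the two recursions above, the coordinates [<q, V^(k+1) e_1>] and [<p, V^k e_1>] are
   combinations of finitely many outputs, and by [lV_norm_bound] they control the norm on [L_-]. *)
Lemma Lminus_observability : exists J K, 0 <= K /\
  forall x, in_Lminus N V x -> dot2 N x x <= K * obs_sum J x.
Proof.
  destruct (lV_norm_bound N V Hsym Hpd) as [m [K [HK Hb]]].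
  destruct (coords_obs_bound m) as [G [HG HG']].
  exists (2 * m + 1)%nat, (K * G). split; [now apply Rmult_le_pos|].
  intros x [Hq Hp]. unfold dot2. pose proof (Hb _ Hq). pose proof (Hb _ Hp).
  specialize (HG' x).
  assert (K * (coords m (fst x) + coords m (snd x)) <= K * (G * obs_sum (2 * m + 1) x))
    by now apply Rmult_le_compat_l.
  lra.
Qed.

Definition mx_norm2 : R := rsum N (fun i => rsum N (fun j => V i j * V i j)).

Lemma mx_norm2_nonneg : 0 <= mx_norm2.
Proof. apply rsum_nonneg; intros; apply rsum_nonneg; intros; apply sq_nonneg. Qed.

Lemma matvec_norm_bound x : dot N (matvec N V x) (matvec N V x) <= mx_norm2 * dot N x x.
Proof.
  unfold mx_norm2. rewrite Rmult_comm, <- rsum_scal. unfold dot at 1. apply rsum_le. intros i Hi.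
  rewrite (Rmult_comm (dot N x x)). apply rsum_Cauchy_Schwarz.
Qed.

Lemma Ham_le_norm x : Ham N V x <= (1 + mx_norm2) * dot2 N x x.
Proof.
  assert (Hq : dot N (fst x) (matvec N V (fst x))
               <= / 2 * (dot N (fst x) (fst x) + dot N (matvec N V (fst x)) (matvec N V (fst x)))).
  { unfold dot. rewrite <- rsum_plus, <- rsum_scal. apply rsum_le. intros i _.
    pose proof (sq_nonneg (fst x i - matvec N V (fst x) i)). lra. }
  pose proof (matvec_norm_bound (fst x)). pose proof mx_norm2_nonneg.
  pose proof (dot_nonneg N (fst x)). pose proof (dot_nonneg N (snd x)).
  unfold Ham, dot2. nra.
Qed.

Definition Aop_norm2 : R := 1 + 2 * mx_norm2 + 2 * (alpha * alpha).

Lemma Aop_norm2_ge1 : 1 <= Aop_norm2.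
Proof. unfold Aop_norm2. pose proof mx_norm2_nonneg. pose proof (sq_nonneg alpha). lra. Qed.

Lemma Aop_norm_bound x : dot2 N (A x) (A x) <= Aop_norm2 * dot2 N x x.
Proof.
  unfold dot2. simpl. set (c := alpha * snd x 0%nat). set (Vq := matvec N V (fst x)).
  assert (Hp : dot N (fun i => - Vq i - (if Nat.eqb i 0 then c else 0))
                     (fun i => - Vq i - (if Nat.eqb i 0 then c else 0))
               <= 2 * dot N Vq Vq + 2 * (c * c)).
  { unfold dot. rewrite <- (rsum_delta N 0 (fun _ => c * c)), <- !rsum_scal, <- rsum_plus by lia.
    apply rsum_le. intros i Hi.
    pose proof (sq_add_le (- Vq i) (- c)). pose proof (sq_nonneg (Vq i)).
    destruct (Nat.eqb i 0); nra. }
  assert (Hc : c * c <= alpha * alpha * dot N (snd x) (snd x)).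
  { replace (c * c) with (alpha * alpha * (snd x 0%nat * snd x 0%nat)) by (unfold c; ring).
    apply Rmult_le_compat_l; [apply sq_nonneg|]. apply sq_le_dot. lia. }
  pose proof (matvec_norm_bound (fst x)). pose proof mx_norm2_nonneg.
  pose proof (dot_nonneg N (fst x)). pose proof (dot_nonneg N (snd x)). pose proof (sq_nonneg alpha).
  unfold Aop_norm2. fold Vq in H. nra.
Qed.

Lemma Apow_norm_bound j x :
  dot2 N (Apow N V alpha j x) (Apow N V alpha j x) <= Aop_norm2 ^ j * dot2 N x x.
Proof.
  induction j as [|j IH]; simpl; [lra|].
  eapply Rle_trans; [apply Aop_norm_bound|]. pose proof Aop_norm2_ge1. rewrite Rmult_assoc.
  apply Rmult_le_compat_l; auto. lra.
Qed.

Lemma Ham_orbit_bound J x :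
  rsum J (fun j => Ham N V (Apow N V alpha j x))
  <= ((1 + mx_norm2) * rsum J (fun j => Aop_norm2 ^ j)) * dot2 N x x.
Proof.
  rewrite Rmult_assoc, (Rmult_comm (rsum J _)), <- rsum_scal, <- rsum_scal.
  apply rsum_le. intros j _. eapply Rle_trans; [apply Ham_le_norm|].
  pose proof mx_norm2_nonneg. apply Rmult_le_compat_l; [lra|].
  rewrite Rmult_comm. apply Apow_norm_bound.
Qed.

Lemma obs_sq_le_Ham j x : Y j x * Y j x <= 2 * Ham N V (Apow N V alpha j x).
Proof.
  unfold obs, Ham. pose proof (sq_le_dot N (snd (Apow N V alpha j x)) 0 ltac:(lia)).
  pose proof (pos_def_nonneg N V (fst (Apow N V alpha j x)) Hpd). lra.
Qed.

End DampedOscillator.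

(** * Exponential series *)

Definition exp_coef (c : nat -> R) (k : nat) : R := c k / INR (fact k).

Lemma is_pseries_exp_coef (c : nat -> R) t l :
  Un_cv (fun n => sum_f_R0 (fun k => t ^ k / INR (fact k) * c k) n) l ->
  is_pseries (exp_coef c) t l.
Proof.
  intros H. apply is_pseries_Reals. intros eps Heps.
  destruct (H eps Heps) as [M HM]. exists M. intros n Hn.
  rewrite (sum_eq _ (fun k => t ^ k / INR (fact k) * c k)); [now apply HM|].
  intros i _. unfold exp_coef. field. apply INR_fact_neq_0.
Qed.

Lemma is_pseries_eq (a : nat -> R) t l l' : is_pseries a t l -> is_pseries a t l' -> l = l'.
Proof. intros H H'. now rewrite <- (is_pseries_unique _ _ _ H), <- (is_pseries_unique _ _ _ H'). Qed.

Lemma is_pseries_zero t : is_pseries (fun _ => 0) t 0.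
Proof.
  apply is_pseries_Reals. intros eps Heps. exists 0%nat. intros n _.
  rewrite (sum_eq _ (fun _ => 0)) by (intros; ring).
  rewrite sum_cte. unfold R_dist. rewrite Rmult_0_l, Rminus_0_r, Rabs_R0. lra.
Qed.

Lemma is_pseries_lin (a b : nat -> R) t la lb c1 c2 :
  is_pseries a t la -> is_pseries b t lb ->
  is_pseries (fun k => c1 * a k + c2 * b k) t (c1 * la + c2 * lb).
Proof.
  intros Ha Hb. apply (is_pseries_scal c1) in Ha; [|apply Rmult_comm].
  apply (is_pseries_scal c2) in Hb; [|apply Rmult_comm].
  exact (is_pseries_plus _ _ _ _ _ Ha Hb).
Qed.

Lemma is_pseries_rsum n (c : nat -> R) (b : nat -> nat -> R) t (l : nat -> R) :
  (forall j, (j < n)%nat -> is_pseries (b j) t (l j)) ->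
  is_pseries (fun k => rsum n (fun j => c j * b j k)) t (rsum n (fun j => c j * l j)).
Proof.
  induction n as [|n IH]; intros H; simpl.
  - apply is_pseries_zero.
  - apply (is_pseries_ext (fun k => 1 * rsum n (fun j => c j * b j k) + c n * b n k));
      [intros; simpl; ring|].
    replace (rsum n (fun j => c j * l j) + c n * l n)
      with (1 * rsum n (fun j => c j * l j) + c n * l n) by ring.
    apply is_pseries_lin; [apply IH; intros; apply H; lia | apply H; lia].
Qed.

Lemma CV_radius_gt (a : nat -> R) t :
  (forall s, exists l, is_pseries a s l) -> Rbar_lt (Rabs t) (CV_radius a).
Proof.
  intros H. destruct (H (Rabs t + 1)) as [l Hl].
  assert (Hle : Rbar_le (Rabs (Rabs t + 1)) (CV_radius a)).
  { apply Rbar_not_lt_le. intros Hlt. apply (CV_disk_outside a _ Hlt).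
    assert (Hex : ex_series (fun n => scal (pow_n (Rabs t + 1) n) (a n))) by now exists l.
    apply ex_series_lim_0 in Hex. apply is_lim_seq_ext with (2 := Hex). intros n. simpl.
    rewrite pow_n_pow. change (scal ((Rabs t + 1) ^ n) (a n)) with ((Rabs t + 1) ^ n * a n). ring. }
  rewrite (Rabs_pos_eq (Rabs t + 1)) in Hle by (pose proof (Rabs_pos t); lra).
  destruct (CV_radius a); simpl in *; auto. lra.
Qed.

Lemma PS_derive_exp_coef (c : nat -> R) k :
  PS_derive (exp_coef c) k = exp_coef (fun k => c (S k)) k.
Proof.
  unfold PS_derive, exp_coef. rewrite fact_simpl, mult_INR. field.
  split; [apply INR_fact_neq_0|apply not_0_INR; lia].
Qed.

Lemma is_derive_exp_series (c : nat -> R) (f g : R -> R) :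
  (forall t, is_pseries (exp_coef c) t (f t)) ->
  (forall t, is_pseries (exp_coef (fun k => c (S k))) t (g t)) ->
  forall t, is_derive f t (g t).
Proof.
  intros Hf Hg t.
  assert (Hr : Rbar_lt (Rabs t) (CV_radius (exp_coef c))) by (apply CV_radius_gt; eauto).
  pose proof (is_derive_PSeries _ t Hr) as D.
  rewrite (PSeries_ext _ _ t (PS_derive_exp_coef c)), (is_pseries_unique _ _ _ (Hg t)) in D.
  eapply is_derive_ext; [|exact D]. intros s. now apply is_pseries_unique.
Qed.

Lemma is_derive_Rplus (f g : R -> R) t a b :
  is_derive f t a -> is_derive g t b -> is_derive (fun s => f s + g s) t (a + b).
Proof. intros. now apply (is_derive_plus f g). Qed.

Lemma is_derive_Rmult (f g : R -> R) t a b :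
  is_derive f t a -> is_derive g t b -> is_derive (fun s => f s * g s) t (a * g t + f t * b).
Proof. intros Hf Hg. apply (is_derive_mult f g); auto. intros; apply Rmult_comm. Qed.

Lemma is_derive_rsum n (f : nat -> R -> R) df t :
  (forall i, (i < n)%nat -> is_derive (f i) t (df i)) ->
  is_derive (fun s => rsum n (fun i => f i s)) t (rsum n df).
Proof.
  induction n as [|n IH]; intros H; simpl; [apply (is_derive_const 0)|].
  apply is_derive_Rplus; [apply IH; intros; apply H; lia|apply H; lia].
Qed.

Lemma is_derive_0_const (f : R -> R) : (forall t, is_derive f t 0) -> forall t, f t = f 0.
Proof.
  intros H t. destruct (MVT_cor4 f (fun _ => 0) 0 (Rabs (t - 0))) with (b := t) as [c [Hc _]].
  - intros; apply H.
  - lra.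
  - lra.
Qed.

Lemma is_derive_nonpos_le (f df : R -> R) :
  (forall t, is_derive f t (df t)) -> (forall t, df t <= 0) -> forall t, t >= 0 -> f t <= f 0.
Proof.
  intros H Hd t Ht. destruct (MVT_cor4 f df 0 (Rabs (t - 0))) with (b := t) as [c [Hc _]].
  - intros; apply H.
  - lra.
  - pose proof (Hd c). assert (df c * (t - 0) <= 0) by (apply Rmult_le_0_r; lra). lra.
Qed.

Lemma gronwall (f df : R -> R) k :
  0 < k -> (forall t, is_derive f t (df t)) -> (forall t, df t <= - k * f t) ->
  forall t, t >= 0 -> f t <= exp (- k * t) * f 0.
Proof.
  intros Hk H Hd t Ht.
  set (g := fun s => exp (k * s) * f s).
  assert (Hg : forall s, is_derive g s (k * exp (k * s) * f s + exp (k * s) * df s)).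
  { intros s. apply (is_derive_Rmult (fun s => exp (k * s)) f s); auto. auto_derive; auto. ring. }
  assert (Hgd : forall s, k * exp (k * s) * f s + exp (k * s) * df s <= 0).
  { intros s. pose proof (exp_pos (k * s)). specialize (Hd s).
    replace (k * exp (k * s) * f s + exp (k * s) * df s) with (exp (k * s) * (k * f s + df s))
      by ring.
    apply Rmult_le_0_l; lra. }
  pose proof (is_derive_nonpos_le g _ Hg Hgd t Ht) as Hgt. unfold g in Hgt.
  rewrite Rmult_0_r, exp_0, Rmult_1_l in Hgt.
  replace (f t) with (exp (- k * t) * (exp (k * t) * f t)).
  - apply Rmult_le_compat_l; auto. apply Rlt_le, exp_pos.
  - rewrite <- Rmult_assoc, <- exp_plus. replace (- k * t + k * t) with 0 by ring.
    rewrite exp_0. ring.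
Qed.

Section ExponentialFlow.
Variable N : nat.
Variable V : nat -> nat -> R.
Variable alpha : R.
Variable E : R -> state -> state.
Hypothesis HN : (1 <= N)%nat.
Hypothesis Hsym : symmetric N V.
Hypothesis HE : forall t psi, is_expA N V alpha t psi (E t psi).

Notation A := (Aop N V alpha).
Notation Ap := (Apow N V alpha).

Lemma E_fst_pseries t psi i :
  (i < N)%nat -> is_pseries (exp_coef (fun k => fst (Ap k psi) i)) t (fst (E t psi) i).
Proof. intros Hi. apply is_pseries_exp_coef, (HE t psi i Hi). Qed.

Lemma E_snd_pseries t psi i :
  (i < N)%nat -> is_pseries (exp_coef (fun k => snd (Ap k psi) i)) t (snd (E t psi) i).
Proof. intros Hi. apply is_pseries_exp_coef, (HE t psi i Hi). Qed.

Lemma E_Aop t psi : st_eq N (E t (A psi)) (A (E t psi)).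
Proof.
  intros i Hi. split.
  - apply (is_pseries_eq (exp_coef (fun k => snd (Ap k psi) i)) t).
    + apply (is_pseries_ext (exp_coef (fun k => fst (Ap k (A psi)) i))).
      * intros k. unfold exp_coef. now rewrite Apow_Aop.
      * now apply E_fst_pseries.
    + now apply E_snd_pseries.
  - apply (is_pseries_eq (exp_coef (fun k => snd (Ap k (A psi)) i)) t);
      [now apply E_snd_pseries|].
    set (d := if Nat.eqb i 0 then alpha else 0).
    apply (is_pseries_ext
      (fun k => (-1) * rsum N (fun j => V i j * exp_coef (fun k => fst (Ap k psi) j) k)
                + (- d) * exp_coef (fun k => snd (Ap k psi) 0%nat) k)).
    + intros k. unfold exp_coef. rewrite Apow_Aop.
      rewrite (rsum_ext N _ (fun j => / INR (fact k) * (V i j * fst (Ap k psi) j)))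
        by (intros; unfold Rdiv; ring).
      rewrite rsum_scal. simpl. unfold matvec, d. pose proof (INR_fact_neq_0 k).
      destruct (Nat.eqb i 0); field; auto.
    + replace (snd (A (E t psi)) i)
        with ((-1) * rsum N (fun j => V i j * fst (E t psi) j) + (- d) * snd (E t psi) 0%nat)
        by (simpl; unfold matvec, d; destruct (Nat.eqb i 0); ring).
      apply is_pseries_lin; [apply is_pseries_rsum; intros; now apply E_fst_pseries|].
      apply E_snd_pseries. lia.
Qed.

Lemma E_at_0 psi : st_eq N (E 0 psi) psi.
Proof.
  intros i Hi. split.
  - pose proof (is_pseries_unique _ _ _ (E_fst_pseries 0 psi i Hi)) as H.
    rewrite PSeries_0 in H. unfold exp_coef in H. simpl in H. lra.
  - pose proof (is_pseries_unique _ _ _ (E_snd_pseries 0 psi i Hi)) as H.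
    rewrite PSeries_0 in H. unfold exp_coef in H. simpl in H. lra.
Qed.

Lemma E_Apow j t psi : st_eq N (E t (Ap j psi)) (Ap j (E t psi)).
Proof.
  induction j as [|j IH]; [apply st_eq_refl|]. simpl.
  eapply st_eq_trans; [apply E_Aop|]. now apply Aop_ext.
Qed.

Definition is_trajectory (X : R -> state) : Prop := forall t i, (i < N)%nat ->
  is_derive (fun s => fst (X s) i) t (fst (A (X t)) i) /\
  is_derive (fun s => snd (X s) i) t (snd (A (X t)) i).

Lemma E_trajectory psi : is_trajectory (fun s => E s psi).
Proof.
  intros t i Hi. destruct (E_Aop t psi i Hi) as [H1 H2]. rewrite <- H1, <- H2. split.
  - apply (is_derive_exp_series (fun k => fst (Ap k psi) i) (fun s => fst (E s psi) i)
                                 (fun s => fst (E s (A psi)) i)); intros s.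
    + now apply E_fst_pseries.
    + apply (is_pseries_ext (exp_coef (fun k => fst (Ap k (A psi)) i))); [|now apply E_fst_pseries].
      intros k. unfold exp_coef. now rewrite Apow_Aop.
  - apply (is_derive_exp_series (fun k => snd (Ap k psi) i) (fun s => snd (E s psi) i)
                                 (fun s => snd (E s (A psi)) i)); intros s.
    + now apply E_snd_pseries.
    + apply (is_pseries_ext (exp_coef (fun k => snd (Ap k (A psi)) i))); [|now apply E_snd_pseries].
      intros k. unfold exp_coef. now rewrite Apow_Aop.
Qed.

Lemma energy_deriv X Y : is_trajectory X -> is_trajectory Y -> forall t,
  is_derive (fun s => energy N V (X s) (Y s)) t (-2 * alpha * snd (X t) 0%nat * snd (Y t) 0%nat).
Proof.
  intros HX HY t. rewrite <- (energy_Aop N V alpha) by auto.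
  set (dp := fun i => snd (A (X t)) i * snd (Y t) i + snd (X t) i * snd (A (Y t)) i).
  set (dq := fun i => fst (A (X t)) i * matvec N V (fst (Y t)) i
                      + fst (X t) i * matvec N V (fst (A (Y t))) i).
  replace (energy N V (A (X t)) (Y t) + energy N V (X t) (A (Y t))) with (rsum N dp + rsum N dq)
    by (unfold energy, dot, dp, dq; rewrite !rsum_plus; ring).
  apply is_derive_Rplus.
  - apply (is_derive_rsum N (fun i s => snd (X s) i * snd (Y s) i)).
    intros i Hi. apply is_derive_Rmult; [apply HX|apply HY]; auto.
  - apply (is_derive_rsum N (fun i s => fst (X s) i * matvec N V (fst (Y s)) i)).
    intros i Hi. apply is_derive_Rmult; [apply HX; auto|]. unfold matvec.
    apply (is_derive_rsum N (fun j s => V i j * fst (Y s) j)).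
    intros j Hj. apply is_derive_scal. apply HY; auto.
Qed.

(* Each coordinate of [E t psi] is the sum of the exponential series, so orthogonality to a
   fixed vector passes from all [A^k psi] to [E t psi]. *)
Lemma E_orth psi phi t : (forall k, dot2 N (Ap k psi) phi = 0) -> dot2 N (E t psi) phi = 0.
Proof.
  intros H.
  assert (Hser : is_pseries
    (fun k => 1 * rsum N (fun i => fst phi i * exp_coef (fun k => fst (Ap k psi) i) k)
            + 1 * rsum N (fun i => snd phi i * exp_coef (fun k => snd (Ap k psi) i) k)) t
    (1 * rsum N (fun i => fst phi i * fst (E t psi) i)
     + 1 * rsum N (fun i => snd phi i * snd (E t psi) i))).
  { apply is_pseries_lin; apply is_pseries_rsum; intros;
      [apply E_fst_pseries|apply E_snd_pseries]; auto. }
  assert (Hzero : forall k,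
    1 * rsum N (fun i => fst phi i * exp_coef (fun k => fst (Ap k psi) i) k)
    + 1 * rsum N (fun i => snd phi i * exp_coef (fun k => snd (Ap k psi) i) k) = 0).
  { intros k. specialize (H k). unfold dot2, dot in H. unfold exp_coef.
    rewrite (rsum_ext N _ (fun i => / INR (fact k) * (fst (Ap k psi) i * fst phi i)))
      by (intros; unfold Rdiv; ring).
    rewrite (rsum_ext N (fun i => snd phi i * _) (fun i => / INR (fact k) * (snd (Ap k psi) i * snd phi i)))
      by (intros; unfold Rdiv; ring).
    rewrite !rsum_scal, !Rmult_1_l, <- Rmult_plus_distr_l, H. ring. }
  apply (is_pseries_ext _ (fun _ => 0)) in Hser; [|exact Hzero].
  pose proof (is_pseries_eq _ _ _ _ Hser (is_pseries_zero t)).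
  unfold dot2, dot.
  rewrite (rsum_ext N (fun i => fst (E t psi) i * fst phi i) (fun i => fst phi i * fst (E t psi) i))
    by (intros; ring).
  rewrite (rsum_ext N (fun i => snd (E t psi) i * snd phi i) (fun i => snd phi i * snd (E t psi) i))
    by (intros; ring).
  lra.
Qed.

Lemma E_Lminus t psi : in_Lminus N V psi -> in_Lminus N V (E t psi).
Proof.
  intros Hpsi. split; apply in_lV_of_orth; intros w Hw.
  - assert (H : dot2 N (E t psi) (w, fun _ => 0) = 0).
    { apply E_orth. intros k. destruct (Lminus_Apow N V alpha k psi Hpsi) as [H1 H2]. unfold dot2.
      simpl. rewrite dot_zero_r, dot_comm, Hw; auto. ring. }
    unfold dot2 in H. simpl in H. rewrite dot_zero_r in H. lra.
  - assert (H : dot2 N (E t psi) (fun _ => 0, w) = 0).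
    { apply E_orth. intros k. destruct (Lminus_Apow N V alpha k psi Hpsi) as [H1 H2]. unfold dot2.
      simpl. rewrite dot_zero_r, (dot_comm N _ w), Hw; auto. ring. }
    unfold dot2 in H. simpl in H. rewrite dot_zero_r in H. lra.
Qed.

Lemma E_L0 t phi : in_L0 N V phi -> in_L0 N V (E t phi).
Proof. intros Hphi w Hw. apply E_orth. intros k. now apply L0_Apow. Qed.

End ExponentialFlow.

(** * Exponential decay on [L_-] *)

Lemma tends_to_0_exp_bound (f : R -> R) C k :
  0 < k -> (forall t, t >= 0 -> Rabs (f t) <= C * exp (- k * t)) -> tends_to_0_at_infty f.
Proof.
  intros Hk Hf eps Heps. set (B := Rabs C + 1).
  assert (HB : 0 < B) by (unfold B; pose proof (Rabs_pos C); lra).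
  set (T := (ln B - ln eps) / k + 1).
  exists (Rmax 0 T). intros t Ht.
  pose proof (Rmax_l 0 T). pose proof (Rmax_r 0 T).
  assert (HkT : k * t >= ln B - ln eps + k).
  { replace (ln B - ln eps + k) with (k * T) by (unfold T; field; lra).
    apply Rmult_ge_compat_l; lra. }
  assert (Hexp : exp (- k * t) < eps / B).
  { replace (eps / B) with (exp (ln eps - ln B))
      by (unfold Rminus; rewrite exp_plus, exp_Ropp, !exp_ln by lra; reflexivity).
    apply exp_increasing. lra. }
  eapply Rle_lt_trans; [apply Hf; lra|].
  pose proof (exp_pos (- k * t)). pose proof (Rle_abs C).
  apply (Rle_lt_trans _ (B * exp (- k * t))); [apply Rmult_le_compat_r; unfold B; lra|].
  apply (Rmult_lt_compat_l B) in Hexp; auto. replace (B * (eps / B)) with eps in Hexp by (field; lra).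
  exact Hexp.
Qed.

Lemma le_0_of_le_tends_to_0 (g : R -> R) s c :
  0 <= c -> (forall t, s <= c * g t) -> tends_to_0_at_infty g -> s <= 0.
Proof.
  intros Hc Hs Hg. apply le_epsilon. intros e He.
  destruct (Hg (e / (c + 1))) as [T HT]; [apply Rdiv_lt_0_compat; lra|].
  specialize (HT T (Rge_refl T)). specialize (Hs T). pose proof (Rle_abs (g T)).
  assert (c * g T <= c * (e / (c + 1))) by (apply Rmult_le_compat_l; lra).
  assert (c * (e / (c + 1)) <= e).
  { apply (Rmult_le_reg_r (c + 1)); [lra|]. replace (c * (e / (c + 1)) * (c + 1)) with (c * e)
      by (field; lra). nra. }
  lra.
Qed.

Section Decay.
Variable N : nat.
Variable V : nat -> nat -> R.
Variable alpha : R.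
Variable E : R -> state -> state.
Hypothesis HN : (1 <= N)%nat.
Hypothesis Hsym : symmetric N V.
Hypothesis Hpd : pos_def N V.
Hypothesis Halpha : alpha > 0.
Hypothesis HE : forall t psi, is_expA N V alpha t psi (E t psi).

Notation A := (Aop N V alpha).
Notation Ap := (Apow N V alpha).
Notation obs_sum := (obs_sum N V alpha).

Lemma Ham_E_deriv psi t :
  is_derive (fun s => Ham N V (E s psi)) t (- alpha * (snd (E t psi) 0%nat * snd (E t psi) 0%nat)).
Proof.
  apply (is_derive_ext (fun s => / 2 * energy N V (E s psi) (E s psi))).
  { intros s. now rewrite Ham_energy. }
  replace (- alpha * (snd (E t psi) 0%nat * snd (E t psi) 0%nat))
    with (/ 2 * (-2 * alpha * snd (E t psi) 0%nat * snd (E t psi) 0%nat)) by field.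
  apply is_derive_scal, (energy_deriv N V alpha); auto; apply (E_trajectory N V alpha E); auto.
Qed.

(* The Lyapunov function: the energy of the first [J] derivatives of the orbit. *)
Definition lyapunov (J : nat) (x : state) : R := rsum J (fun j => Ham N V (Ap j x)).

Lemma lyapunov_E_deriv J psi t :
  is_derive (fun s => lyapunov J (E s psi)) t (- alpha * obs_sum J (E t psi)).
Proof.
  apply (is_derive_ext (fun s => rsum J (fun j => Ham N V (E s (Ap j psi))))).
  { intros s. apply rsum_ext. intros j _. apply (Ham_ext N V), (E_Apow N V alpha E); auto. }
  unfold obs_sum. rewrite <- rsum_scal.
  apply (is_derive_ext _ _ _ _ (fun s => eq_refl)).
  erewrite rsum_ext; [apply (is_derive_rsum J (fun j s => Ham N V (E s (Ap j psi))));
    intros; apply Ham_E_deriv|].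
  intros j _. unfold obs. destruct (E_Apow N V alpha E HN HE j t psi 0%nat ltac:(lia)) as [_ ->].
  ring.
Qed.

Lemma lyapunov_nonneg J x : 0 <= lyapunov J x.
Proof. apply rsum_nonneg. intros; apply (Ham_nonneg N V Hpd). Qed.

Lemma obs_sum_le_lyapunov J x : obs_sum J x <= 2 * lyapunov J x.
Proof.
  unfold obs_sum, lyapunov. rewrite <- rsum_scal. apply rsum_le. intros.
  eapply obs_sq_le_Ham; eauto.
Qed.

Lemma energy_decay : exists M k, 0 <= M /\ 0 < k /\
  forall t psi, t >= 0 -> in_Lminus N V psi ->
    dot2 N (E t psi) (E t psi) <= M * exp (- k * t) * dot2 N psi psi.
Proof.
  destruct (Lminus_observability N V alpha HN Hsym Hpd) as [J [K1 [HK1 Hobs]]].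
  set (KW := (1 + mx_norm2 N V) * rsum J (fun j => Aop_norm2 N V alpha ^ j)).
  assert (HKW : 0 <= KW).
  { apply Rmult_le_pos; [pose proof (mx_norm2_nonneg N V); lra|]. apply rsum_nonneg. intros.
    apply pow_le. pose proof (Aop_norm2_ge1 N V alpha). lra. }
  assert (Hly : forall x, lyapunov J x <= KW * dot2 N x x) by (intros; apply Ham_orbit_bound; auto).
  set (k := alpha / ((KW + 1) * (K1 + 1))).
  assert (Hk : 0 < k) by (apply Rdiv_lt_0_compat; [lra|]; apply Rmult_lt_0_compat; lra).
  assert (Hly_obs : forall x, in_Lminus N V x -> k * lyapunov J x <= alpha * obs_sum J x).
  { intros x Hx. pose proof (Hly x). pose proof (Hobs x Hx). pose proof (lyapunov_nonneg J x).
    pose proof (obs_sum_nonneg N V alpha J x). pose proof (dot2_nonneg N x).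
    assert (lyapunov J x <= (KW + 1) * (K1 + 1) * obs_sum J x) by nra.
    unfold k. apply (Rmult_le_reg_l ((KW + 1) * (K1 + 1))); [apply Rmult_lt_0_compat; lra|].
    replace ((KW + 1) * (K1 + 1) * (alpha / ((KW + 1) * (K1 + 1)) * lyapunov J x))
      with (alpha * lyapunov J x) by (field; lra). nra. }
  exists (2 * K1 * KW), k. split; [apply Rmult_le_pos; lra|]. split; auto.
  intros t psi Ht Hpsi.
  assert (HW : lyapunov J (E t psi) <= exp (- k * t) * lyapunov J (E 0 psi)).
  { apply (gronwall (fun s => lyapunov J (E s psi)) (fun s => - alpha * obs_sum J (E s psi)));
      auto; [apply lyapunov_E_deriv|].
    intros s. pose proof (Hly_obs _ (E_Lminus N V alpha E HE s psi Hpsi)). lra. }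
  replace (lyapunov J (E 0 psi)) with (lyapunov J psi) in HW
    by (apply rsum_ext; intros; symmetry;
        apply (Ham_ext N V), (Apow_ext N V alpha), (E_at_0 N V alpha E); auto).
  pose proof (Hobs _ (E_Lminus N V alpha E HE t psi Hpsi)).
  pose proof (obs_sum_le_lyapunov J (E t psi)). pose proof (Hly psi). pose proof (exp_pos (- k * t)).
  apply (Rle_trans _ (K1 * obs_sum J (E t psi))); auto.
  apply (Rle_trans _ (K1 * (2 * (exp (- k * t) * (KW * dot2 N psi psi))))); [|nra].
  apply Rmult_le_compat_l; auto. nra.
Qed.

Lemma norm_E_decay : exists C c, c > 0 /\ forall t psi, t >= 0 -> in_Lminus N V psi ->
  norm2 N (E t psi) <= C * exp (- c * t) * norm2 N psi.
Proof.
  destruct energy_decay as [M [k [HM [Hk Hd]]]]. exists (sqrt M), (k / 2). split; [lra|].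
  intros t psi Ht Hpsi. unfold norm2. set (e := exp (- (k / 2) * t)).
  assert (He : 0 <= e) by apply Rlt_le, exp_pos.
  assert (Hee : exp (- k * t) = e * e) by (unfold e; rewrite <- exp_plus; f_equal; field).
  specialize (Hd t psi Ht Hpsi). rewrite Hee in Hd.
  eapply Rle_trans; [apply sqrt_le_1_alt, Hd|].
  pose proof (dot2_nonneg N psi). pose proof (sq_nonneg e).
  rewrite sqrt_mult, sqrt_mult, sqrt_square by (try apply Rmult_le_pos; auto). lra.
Qed.

Lemma Ham_E_tends_to_0 psi : in_Lminus N V psi -> tends_to_0_at_infty (fun t => Ham N V (E t psi)).
Proof.
  intros Hpsi. destruct energy_decay as [M [k [HM [Hk Hd]]]].
  apply (tends_to_0_exp_bound _ ((1 + mx_norm2 N V) * M * dot2 N psi psi) k Hk).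
  intros t Ht. rewrite Rabs_pos_eq by apply (Ham_nonneg N V Hpd).
  eapply Rle_trans; [apply Ham_le_norm|]. pose proof (mx_norm2_nonneg N V).
  specialize (Hd t psi Ht Hpsi).
  replace ((1 + mx_norm2 N V) * M * dot2 N psi psi * exp (- k * t))
    with ((1 + mx_norm2 N V) * (M * exp (- k * t) * dot2 N psi psi)) by ring.
  apply Rmult_le_compat_l; lra.
Qed.

Lemma E_L0_p1 t phi : in_L0 N V phi -> snd (E t phi) 0%nat = 0.
Proof.
  intros Hphi. assert (H : dot2 N (E t phi) (fun _ => 0, e1) = 0).
  { apply (E_L0 N V alpha E); auto. split; [apply in_lV_zero|apply in_lV_e1]. }
  unfold dot2 in H. simpl in H. rewrite dot_zero_r, dot_e1 in H by auto. lra.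
Qed.

(* Since [p_1] vanishes along orbits in [L_0], the energy pairing with them is conserved. *)
Lemma energy_E_L0 t psi phi : in_L0 N V phi -> energy N V (E t psi) (E t phi) = energy N V psi phi.
Proof.
  intros Hphi. rewrite (is_derive_0_const (fun s => energy N V (E s psi) (E s phi))).
  - apply (energy_ext N V); apply (E_at_0 N V alpha E HE).
  - intros s. replace 0 with (-2 * alpha * snd (E s psi) 0%nat * snd (E s phi) 0%nat)
      by (rewrite (E_L0_p1 s phi) by auto; ring).
    apply (energy_deriv N V alpha); auto; apply (E_trajectory N V alpha E); auto.
Qed.

Lemma energy_L0_eq0 psi phi :
  in_L0 N V phi -> tends_to_0_at_infty (fun t => Ham N V (E t psi)) -> energy N V psi phi = 0.
Proof.
  intros Hphi Hlim. set (b := energy N V phi phi).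
  assert (Hb : 0 <= b) by apply (energy_nonneg N V Hpd).
  assert (Hsq : energy N V psi phi * energy N V psi phi <= 0).
  { apply (le_0_of_le_tends_to_0 (fun t => Ham N V (E t psi)) _ (2 * b)); auto; [lra|].
    intros t. pose proof (energy_Cauchy_Schwarz N V Hsym Hpd (E t psi) (E t phi)) as H.
    rewrite energy_E_L0, (energy_E_L0 t phi phi) in H by auto. fold b in H.
    rewrite Ham_energy. lra. }
  pose proof (sq_nonneg (energy N V psi phi)). nra.
Qed.

Lemma Lminus_of_Ham_tends_to_0 psi :
  tends_to_0_at_infty (fun t => Ham N V (E t psi)) -> in_Lminus N V psi.
Proof.
  intros Hlim.
  destruct (lV_orth_decomp N V (fst psi)) as [yq [zq [Hyq [Hzq Eq]]]].
  destruct (lV_orth_decomp N V (snd psi)) as [yp [zp [Hyp [Hzp Ep]]]].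
  assert (Hphi : in_L0 N V (zq, zp)).
  { intros w [Hw1 Hw2]. unfold dot2. simpl. rewrite Hzq, Hzp by auto. ring. }
  pose proof (energy_L0_eq0 psi (zq, zp) Hphi Hlim) as H0. unfold energy in H0. simpl in H0.
  rewrite (dot_ext N (snd psi) (fun i => yp i + zp i) zp zp),
          (dot_ext N (fst psi) (fun i => yq i + zq i) (matvec N V zq) (matvec N V zq)),
          !dot_plus_l, (dot_comm N yp), Hzp, (dot_matvec_sym N V yq), (dot_comm N _ zq), Hzq
    in H0 by (auto using in_lV_matvec).
  pose proof (dot_nonneg N zp). pose proof (pos_def_nonneg N V zq Hpd).
  assert (Zp := dot_self_eq0 N zp ltac:(lra)). assert (Zq := pos_def_eq0 N V zq Hpd ltac:(lra)).
  split.
  - apply (in_lV_ext N V yq); auto. intros i Hi. rewrite Eq, Zq by auto. ring.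
  - apply (in_lV_ext N V yp); auto. intros i Hi. rewrite Ep, Zp by auto. ring.
Qed.

End Decay.

Theorem mainTheorem16 (N : nat) (V : nat -> nat -> R) (alpha : R)
  (E : R -> state -> state)
  (HN : (1 <= N)%nat)
  (Hsym : symmetric N V) (Hpd : pos_def N V) (Halpha : alpha > 0)
  (HE : forall t psi, is_expA N V alpha t psi (E t psi)) :
  (forall psi, in_Lminus N V psi -> in_Lminus N V (Aop N V alpha psi)) /\
  (forall psi, in_L0 N V psi -> in_L0 N V (Aop N V alpha psi)) /\
  (forall a b, eigenvalue_Aminus N V alpha a b -> a < 0) /\
  (exists C c, c > 0 /\
     forall t psi, t >= 0 -> in_Lminus N V psi ->
       norm2 N (E t psi) <= C * exp (- c * t) * norm2 N psi) /\
  (forall psi, in_Lminus N V psi <->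
     tends_to_0_at_infty (fun t => Ham N V (E t psi))).
Proof.
  split; [apply Lminus_Aop|].
  split; [apply L0_Aop; auto|].
  split; [intros a b; eapply eigenvalue_Aminus_neg; eauto|].
  split; [eapply norm_E_decay; eauto|].
  intros psi. split; [eapply Ham_E_tends_to_0|eapply Lminus_of_Ham_tends_to_0]; eauto.
Qed.
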